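(* Let $X$ be a Banach space, $\Omega\in L(X)$ an isomorphism of $X$ onto itself, $\tau>0$, $\varphi\in C^{2}([-2\tau,0],X)$ and $f\in C^{0}([0,\infty),X)$. Then the unique classical solution of $$\ddot x(t)-\Omega^{2}x(t-2\tau)=f(t)\ (t\ge0),\qquad x(t)=\varphi(t)\ (t\in[-2\tau,0])$$ is, for $t\in[-2\tau,\infty)$, $$x(t)=x_1(t+\tau;\Omega)\varphi(-2\tau)+x_2(t+2\tau;\Omega)\dot\varphi(-2\tau)+\int_{-2\tau}^{0}x_2(t-s;\Omega)\ddot\varphi(s)\,ds+\begin{cases}0,& t\in[-2\tau,0),\\ \int_0^t x_2(t-s;\Omega)f(s)\,ds,& t\ge0.\end{cases}$$
   Context: For $A\in L(X)$, $\exp_\tau(t;A)=0$ for $t<-\tau$, $=\mathrm{id}_X$ for $-\tau\le t<0$, and $=\sum_{j=0}^{k}A^{j}\frac{(t-(j-1)\tau)^{j}}{j!}$ for $(k-1)\tau\le t<k\tau$, $k\in\mathbb N$. For $t\in\mathbb R$, $x_1(t;\Omega):=\tfrac12(\exp_\tau(t;\Omega)+\exp_\tau(t;-\Omega))$ and $x_2(t;\Omega):=\tfrac12\Omega^{-1}(\exp_\tau(t;\Omega)-\exp_\tau(t;-\Omega))$; in particular $x_2(t;\Omega)=0$ for $t<0$. A classical solution is a function $x\in C^{1}([-2\tau,\infty),X)\cap C^{2}([-2\tau,0],X)\cap C^{2}([0,\infty),X)$ (one-sided derivatives at endpoints) satisfying the equations pointwise. *)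

From Stdlib Require Import Reals Lra Lia ZArith.
Open Scope R_scope.

Record Banach := {
  car :> Type;
  vzero : car;
  vadd : car -> car -> car;
  vopp : car -> car;
  vscal : R -> car -> car;
  vnorm : car -> R;
  vadd_assoc : forall x y z, vadd x (vadd y z) = vadd (vadd x y) z;
  vadd_comm : forall x y, vadd x y = vadd y x;
  vadd_zero : forall x, vadd vzero x = x;
  vadd_opp : forall x, vadd (vopp x) x = vzero;
  vscal_assoc : forall a b x, vscal a (vscal b x) = vscal (a * b) x;
  vscal_one : forall x, vscal 1 x = x;
  vscal_distr_v : forall a x y, vscal a (vadd x y) = vadd (vscal a x) (vscal a y);
  vscal_distr_s : forall a b x, vscal (a + b) x = vadd (vscal a x) (vscal b x);
  vnorm_eq0 : forall x, vnorm x = 0 -> x = vzero;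
  vnorm_scal : forall a x, vnorm (vscal a x) = Rabs a * vnorm x;
  vnorm_triangle : forall x y, vnorm (vadd x y) <= vnorm x + vnorm y;
  vcomplete : forall u : nat -> car,
    (forall eps, 0 < eps -> exists N, forall m n, (N <= m)%nat -> (N <= n)%nat ->
        vnorm (vadd (u m) (vopp (u n))) < eps) ->
    exists l, forall eps, 0 < eps -> exists N, forall n, (N <= n)%nat ->
        vnorm (vadd (u n) (vopp l)) < eps
}.

Arguments vzero {_}.
Arguments vadd {_} _ _.
Arguments vopp {_} _.
Arguments vscal {_} _ _.
Arguments vnorm {_} _.

Definition vsub {X : Banach} (x y : X) : X := vadd x (vopp y).

Fixpoint vsum {X : Banach} (n : nat) (g : nat -> X) : X :=
  match n with
  | O => vzero
  | S m => vadd (vsum m g) (g m)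
  end.

Definition bounded_linear {X : Banach} (A : X -> X) : Prop :=
  (forall x y, A (vadd x y) = vadd (A x) (A y)) /\
  (forall a x, A (vscal a x) = vscal a (A x)) /\
  (exists M, forall x, vnorm (A x) <= M * vnorm x).

(* exp_tau(t;A) applied to v.  For t >= -tau the index k with
   (k-1) tau <= t < k tau is k = up (t/tau) (up y = floor y + 1). *)
Definition exp_tau {X : Banach} (tau : R) (A : X -> X) (t : R) (v : X) : X :=
  if Rlt_dec t (- tau) then vzero
  else vsum (S (Z.to_nat (up (t / tau))))
         (fun j => vscal ((t - (INR j - 1) * tau) ^ j / INR (fact j))
                         (Nat.iter j A v)).

Definition x1 {X : Banach} (tau : R) (Om : X -> X) (t : R) (v : X) : X :=
  vscal (1/2) (vadd (exp_tau tau Om t v) (exp_tau tau (fun y => vopp (Om y)) t v)).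

Definition x2 {X : Banach} (tau : R) (Om Ominv : X -> X) (t : R) (v : X) : X :=
  vscal (1/2) (Ominv (vsub (exp_tau tau Om t v)
                           (exp_tau tau (fun y => vopp (Om y)) t v))).

Definition continuous_on {X : Banach} (I : R -> Prop) (g : R -> X) : Prop :=
  forall t, I t -> forall eps, 0 < eps -> exists delta, 0 < delta /\
    forall s, I s -> Rabs (s - t) < delta -> vnorm (vsub (g s) (g t)) < eps.

Definition has_deriv_on {X : Banach} (I : R -> Prop) (g g' : R -> X) : Prop :=
  forall t, I t -> forall eps, 0 < eps -> exists delta, 0 < delta /\
    forall h, h <> 0 -> Rabs h < delta -> I (t + h) ->
      vnorm (vsub (vscal (/ h) (vsub (g (t + h)) (g t))) (g' t)) < eps.

Definition is_RInt {X : Banach} (g : R -> X) (a b : R) (Ival : X) : Prop :=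
  forall eps, 0 < eps -> exists delta, 0 < delta /\
    forall (n : nat) (p xi : nat -> R),
      p O = a -> p n = b ->
      (forall i, (i < n)%nat ->
         p i <= xi i <= p (S i) /\ p (S i) - p i < delta) ->
      vnorm (vsub (vsum n (fun i => vscal (p (S i) - p i) (g (xi i)))) Ival) < eps.

Definition Icc (a b : R) : R -> Prop := fun t => a <= t <= b.
Definition Ici (a : R) : R -> Prop := fun t => a <= t.

(* Classical solution of  x''(t) - Om^2 x(t - 2 tau) = f(t) (t >= 0),
   x = phi on [-2tau, 0]:  x in C^1([-2tau,oo)) /\ C^2([-2tau,0]) /\ C^2([0,oo)). *)
Definition classical_solution {X : Banach} (Om : X -> X) (tau : R)
    (phi f : R -> X) (x : R -> X) : Prop :=
  exists x' xL'' xR'' : R -> X,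
    has_deriv_on (Ici (-2 * tau)) x x' /\ continuous_on (Ici (-2 * tau)) x' /\
    has_deriv_on (Icc (-2 * tau) 0) x' xL'' /\ continuous_on (Icc (-2 * tau) 0) xL'' /\
    has_deriv_on (Ici 0) x' xR'' /\ continuous_on (Ici 0) xR'' /\
    (forall t, 0 <= t -> vsub (xR'' t) (Om (Om (x (t - 2 * tau)))) = f t) /\
    (forall t, -2 * tau <= t <= 0 -> x t = phi t).

(* Write K(u) = x2(u; Om) and C(u) = x1(u; Om).  Both are finite sums of truncated
   powers (u - 2 m tau)_+^n / n! times Om^(2m), and K(0) = 0, C(-tau) = id,
   dK/du (u) = C(u - tau), d/du C(u - tau) = Om^2 K(u - 2 tau).  Hence for any C^2
   function w the pairing P(s) = K(t - s) w'(s) + C(t - s - tau) w(s) satisfies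
   P(t) = w(t) and P'(s) = K(t - s) w''(s) - Om^2 K(t - s - 2 tau) w(s).  Integrating P'
   over [-2 tau, t] along a classical solution, the delayed term supplied by the equation
   cancels, after the shift s -> s - 2 tau, against the second term, and what remains is
   the representation formula; uniqueness follows from it.  Existence is by the method of
   steps: knowing the solution on [-2 tau, 2 tau n], integrating the equation twice
   extends it to [-2 tau, 2 tau (n + 1)]. *)

From Stdlib Require Import Reals Lra Lia ZArith List Classical ClassicalEpsilon.
Open Scope R_scope.

Arguments vadd_assoc {_}. Arguments vadd_comm {_}. Arguments vadd_zero {_}.
Arguments vadd_opp {_}. Arguments vscal_assoc {_}. Arguments vscal_one {_}.
Arguments vscal_distr_v {_}. Arguments vscal_distr_s {_}. Arguments vnorm_eq0 {_}.
Arguments vnorm_scal {_}. Arguments vnorm_triangle {_}. Arguments vcomplete {_}.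

(** * Vector algebra *)

Section VectorAlgebra.
Context {X : Banach}.
Implicit Types x y z : X.

Lemma vadd_0_r x : vadd x vzero = x.
Proof. rewrite vadd_comm; apply vadd_zero. Qed.

Lemma vadd_opp_r x : vadd x (vopp x) = vzero.
Proof. rewrite vadd_comm; apply vadd_opp. Qed.

Lemma vadd_cancel_l a x y : vadd a x = vadd a y -> x = y.
Proof.
  intros H. rewrite <- (vadd_zero x), <- (vadd_zero y), <- (vadd_opp a).
  rewrite <- !vadd_assoc, H. reflexivity.
Qed.

Lemma vscal_0_l x : vscal 0 x = vzero.
Proof.
  apply (vadd_cancel_l (vscal 0 x)). rewrite vadd_0_r, <- vscal_distr_s.
  now rewrite Rplus_0_r.
Qed.

Lemma vscal_0_r a : vscal a (@vzero X) = vzero.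
Proof.
  apply (vadd_cancel_l (vscal a vzero)). rewrite vadd_0_r, <- vscal_distr_v.
  now rewrite vadd_zero.
Qed.

Lemma vopp_as_scal x : vopp x = vscal (-1) x.
Proof.
  apply (vadd_cancel_l x). rewrite vadd_opp_r.
  rewrite <- (vscal_one x) at 1. rewrite <- vscal_distr_s.
  replace (1 + -1) with 0 by ring. now rewrite vscal_0_l.
Qed.

Lemma vsum_ext n f g : (forall i, (i < n)%nat -> f i = g i) -> @vsum X n f = vsum n g.
Proof.
  induction n; simpl; intros H; auto.
  rewrite IHn, H by (auto; lia). reflexivity.
Qed.

Lemma vsum_zero n : @vsum X n (fun _ => vzero) = vzero.
Proof. induction n; simpl; auto. rewrite IHn; apply vadd_zero. Qed.

Lemma vsum_add n f g : vsum n (fun i => vadd (f i) (g i)) = vadd (@vsum X n f) (vsum n g).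
Proof.
  induction n; simpl. now rewrite vadd_zero.
  rewrite IHn, <- !vadd_assoc. f_equal. rewrite !vadd_assoc. f_equal. apply vadd_comm.
Qed.

Lemma vsum_scal n a f : vsum n (fun i => vscal a (f i)) = vscal a (@vsum X n f).
Proof. induction n; simpl. now rewrite vscal_0_r. now rewrite IHn, vscal_distr_v. Qed.

(* Linear expressions over atoms, evaluated in an environment; [vring] below
   proves an identity by comparing the coefficient of every atom. *)
Inductive vterm := VAtom (n : nat) | VZero | VAdd (a b : vterm) | VOpp (a : vterm)
  | VScal (r : R) (a : vterm).

Fixpoint vterm_eval (env : list X) (e : vterm) : X :=
  match e with
  | VAtom n => nth n env vzero
  | VZero => vzero
  | VAdd a b => vadd (vterm_eval env a) (vterm_eval env b)
  | VOpp a => vopp (vterm_eval env a)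
  | VScal r a => vscal r (vterm_eval env a)
  end.

Fixpoint vterm_coef (e : vterm) (i : nat) : R :=
  match e with
  | VAtom n => if Nat.eqb n i then 1 else 0
  | VZero => 0
  | VAdd a b => vterm_coef a i + vterm_coef b i
  | VOpp a => - vterm_coef a i
  | VScal r a => r * vterm_coef a i
  end.

Fixpoint vterm_wf (N : nat) (e : vterm) : Prop :=
  match e with
  | VAtom n => (n < N)%nat
  | VZero => True
  | VAdd a b => vterm_wf N a /\ vterm_wf N b
  | VOpp a | VScal _ a => vterm_wf N a
  end.

Lemma vsum_indicator (env : list X) N n : (n < N)%nat ->
  vsum N (fun i => vscal (if Nat.eqb n i then 1 else 0) (nth i env vzero)) = nth n env vzero.
Proof.
  induction N; intros H; [lia|]. simpl. destruct (Nat.eq_dec n N) as [->|Hn].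
  - rewrite Nat.eqb_refl, vscal_one, (vsum_ext _ _ (fun _ => vzero)), vsum_zero.
    + apply vadd_zero.
    + intros i Hi. destruct (Nat.eqb_spec N i); [lia|]. apply vscal_0_l.
  - rewrite IHN by lia. destruct (Nat.eqb_spec n N); [lia|]. rewrite vscal_0_l; apply vadd_0_r.
Qed.

Lemma vterm_eval_normal_form (env : list X) N e : vterm_wf N e ->
  vterm_eval env e = vsum N (fun i => vscal (vterm_coef e i) (nth i env vzero)).
Proof.
  induction e; simpl; intros W.
  - now rewrite vsum_indicator.
  - rewrite (vsum_ext _ _ (fun _ => vzero)); [now rewrite vsum_zero|]. intros; apply vscal_0_l.
  - destruct W. rewrite IHe1, IHe2, <- vsum_add by auto. apply vsum_ext.
    intros; now rewrite vscal_distr_s.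
  - rewrite IHe, vopp_as_scal, <- vsum_scal by auto. apply vsum_ext.
    intros; rewrite vscal_assoc; f_equal; ring.
  - rewrite IHe, <- vsum_scal by auto. apply vsum_ext.
    intros; rewrite vscal_assoc; f_equal.
Qed.

Fixpoint all_below (N : nat) (P : nat -> Prop) : Prop :=
  match N with O => True | S n => all_below n P /\ P n end.

Lemma all_below_spec N P : all_below N P -> forall i, (i < N)%nat -> P i.
Proof.
  induction N; simpl; intros H i Hi; [lia|]. destruct H as [H1 H2].
  destruct (Nat.eq_dec i N) as [->|]; auto. apply IHN; auto; lia.
Qed.

Lemma vterm_eval_eq (env : list X) e1 e2 :
  vterm_wf (length env) e1 -> vterm_wf (length env) e2 ->
  all_below (length env) (fun i => vterm_coef e1 i = vterm_coef e2 i) ->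
  vterm_eval env e1 = vterm_eval env e2.
Proof.
  intros W1 W2 H. rewrite !(vterm_eval_normal_form env (length env)) by auto.
  apply vsum_ext. intros i Hi. now rewrite (all_below_spec _ _ H i Hi).
Qed.
End VectorAlgebra.

Ltac vlist_mem x l :=
  lazymatch l with
  | nil => constr:(false)
  | cons x _ => constr:(true)
  | cons _ ?l' => vlist_mem x l'
  end.
Ltac vatoms e acc :=
  lazymatch e with
  | vadd ?a ?b => let acc := vatoms a acc in vatoms b acc
  | vsub ?a ?b => let acc := vatoms a acc in vatoms b acc
  | vopp ?a => vatoms a acc
  | vscal _ ?a => vatoms a acc
  | vzero => acc
  | _ => let b := vlist_mem e acc in
         lazymatch b with true => acc | false => constr:(cons e acc) end
  end.
Ltac vlist_index x l :=
  lazymatch l with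
  | cons x _ => constr:(O)
  | cons _ ?l' => let n := vlist_index x l' in constr:(S n)
  end.
Ltac vreify e l :=
  lazymatch e with
  | vadd ?a ?b => let ra := vreify a l in let rb := vreify b l in constr:(VAdd ra rb)
  | vsub ?a ?b => let ra := vreify a l in let rb := vreify b l in constr:(VAdd ra (VOpp rb))
  | vopp ?a => let ra := vreify a l in constr:(VOpp ra)
  | vscal ?r ?a => let ra := vreify a l in constr:(VScal r ra)
  | vzero => constr:(VZero)
  | _ => let n := vlist_index e l in constr:(VAtom n)
  end.
Ltac vring :=
  lazymatch goal with
  | |- @eq (car ?X) ?a ?b =>
    let l := vatoms a (@nil (car X)) in
    let l := vatoms b l in
    let ra := vreify a l in
    let rb := vreify b l in
    change (@vterm_eval X l ra = @vterm_eval X l rb);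
    apply vterm_eval_eq; simpl; repeat split; try lia; try ring; try field
  end.

Fixpoint rsum (n : nat) (g : nat -> R) : R :=
  match n with O => 0 | S m => rsum m g + g m end.

Lemma rsum_ext n f g : (forall i, (i < n)%nat -> f i = g i) -> rsum n f = rsum n g.
Proof. induction n; simpl; intros H; auto. rewrite IHn, H; auto; lia. Qed.

Lemma rsum_le n f g : (forall i, (i < n)%nat -> f i <= g i) -> rsum n f <= rsum n g.
Proof.
  induction n; simpl; intros H; [lra|].
  pose proof (H n ltac:(lia)). pose proof (IHn ltac:(intros; apply H; lia)). lra.
Qed.

Lemma rsum_scal n a f : rsum n (fun i => a * f i) = a * rsum n f.
Proof. induction n; simpl; [ring|]. rewrite IHn; ring. Qed.

Lemma rsum_telescope n (p : nat -> R) : rsum n (fun i => p (S i) - p i) = p n - p O.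
Proof. induction n; simpl; [ring|]. rewrite IHn; ring. Qed.

Section Norms.
Context {X : Banach}.
Implicit Types x y z : X.

Lemma vnorm_0 : vnorm (@vzero X) = 0.
Proof. rewrite <- (vscal_0_l vzero), vnorm_scal, Rabs_R0; ring. Qed.

Lemma vnorm_opp x : vnorm (vopp x) = vnorm x.
Proof.
  rewrite vopp_as_scal, vnorm_scal.
  replace (Rabs (-1)) with 1 by (rewrite Rabs_left; lra). ring.
Qed.

Lemma vnorm_nonneg x : 0 <= vnorm x.
Proof.
  pose proof (vnorm_triangle x (vopp x)). rewrite vadd_opp_r, vnorm_0, vnorm_opp in H. lra.
Qed.

Lemma vnorm_sub_comm x y : vnorm (vsub x y) = vnorm (vsub y x).
Proof. replace (vsub x y) with (vopp (vsub y x)) by vring. apply vnorm_opp. Qed.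

Lemma vnorm_sub_triangle x y z : vnorm (vsub x z) <= vnorm (vsub x y) + vnorm (vsub y z).
Proof. replace (vsub x z) with (vadd (vsub x y) (vsub y z)) by vring. apply vnorm_triangle. Qed.

Lemma vnorm_sub_le x y : vnorm (vsub x y) <= vnorm x + vnorm y.
Proof. unfold vsub. rewrite <- (vnorm_opp y). apply vnorm_triangle. Qed.

Lemma vsub_eq_0 x y : vsub x y = vzero -> x = y.
Proof. intros H. replace x with (vadd (vsub x y) y) by vring. rewrite H; vring. Qed.

Lemma vsub_eq_add x y z : vsub x y = z -> x = vadd y z.
Proof. intros <-. vring. Qed.

Lemma veq_of_small_dist x y : (forall e, 0 < e -> vnorm (vsub x y) < e) -> x = y.
Proof.
  intros H. apply vsub_eq_0, vnorm_eq0. pose proof (vnorm_nonneg (vsub x y)) as N.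
  destruct (Rle_lt_or_eq_dec _ _ N) as [Hp|]; auto. specialize (H _ Hp). lra.
Qed.

Lemma vsum_split n m f :
  @vsum X (n + m) f = vadd (vsum n f) (vsum m (fun i => f (n + i)%nat)).
Proof.
  induction m; simpl. { rewrite Nat.add_0_r; vring. }
  rewrite Nat.add_succ_r; simpl. rewrite IHm; vring.
Qed.

Lemma vsum_sub n f g : vsum n (fun i => vsub (f i) (g i)) = vsub (@vsum X n f) (vsum n g).
Proof. induction n; simpl; [vring|]. rewrite IHn. vring. Qed.

Lemma vsum_telescope n (G : nat -> X) : vsum n (fun i => vsub (G (S i)) (G i)) = vsub (G n) (G O).
Proof. induction n; simpl; [vring|]. rewrite IHn; vring. Qed.

Lemma vnorm_vsum_le n f : vnorm (@vsum X n f) <= rsum n (fun i => vnorm (f i)).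
Proof.
  induction n; simpl. { rewrite vnorm_0; lra. }
  eapply Rle_trans; [apply vnorm_triangle|lra].
Qed.

Lemma vsum_swap n m (f : nat -> nat -> X) :
  vsum n (fun i => vsum m (fun j => f i j)) = vsum m (fun j => vsum n (fun i => f i j)).
Proof.
  induction n; simpl. { rewrite vsum_zero; auto. }
  rewrite IHn, <- vsum_add. apply vsum_ext; auto.
Qed.

Lemma vsum_scal_l n (c : nat -> R) (v : X) : vsum n (fun i => vscal (c i) v) = vscal (rsum n c) v.
Proof. induction n; simpl. { now rewrite vscal_0_l. } now rewrite IHn, vscal_distr_s. Qed.

Lemma vsum_first n f : @vsum X (S n) f = vadd (f O) (vsum n (fun i => f (S i))).
Proof.
  induction n; [simpl; vring|].
  change (vsum (S (S n)) f) with (vadd (vsum (S n) f) (f (S n))). rewrite IHn. simpl; vring.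
Qed.

Lemma vsum_pairs n f :
  @vsum X (2 * n) f = vsum n (fun m => vadd (f (2 * m)%nat) (f (S (2 * m)))).
Proof.
  induction n; [reflexivity|].
  replace (2 * S n)%nat with (S (S (2 * n))) by lia.
  change (vsum (S (S (2 * n))) f) with (vadd (vadd (vsum (2 * n) f) (f (2 * n)%nat)) (f (S (2 * n)))).
  rewrite IHn. simpl. vring.
Qed.

Lemma bl_add (A : X -> X) x y : bounded_linear A -> A (vadd x y) = vadd (A x) (A y).
Proof. intros [H _]. auto. Qed.

Lemma bl_scal (A : X -> X) a x : bounded_linear A -> A (vscal a x) = vscal a (A x).
Proof. intros [_ [H _]]. auto. Qed.

Lemma bl_zero (A : X -> X) : bounded_linear A -> A vzero = vzero.
Proof. intros HA. rewrite <- (vscal_0_l vzero) at 1. rewrite bl_scal by auto. apply vscal_0_l. Qed.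

Lemma bl_sub (A : X -> X) x y : bounded_linear A -> A (vsub x y) = vsub (A x) (A y).
Proof. intros HA. unfold vsub. rewrite bl_add, !vopp_as_scal, bl_scal; auto. Qed.

Lemma bl_vsum (A : X -> X) n f : bounded_linear A -> A (vsum n f) = vsum n (fun i => A (f i)).
Proof. intros H; induction n; simpl. { apply bl_zero; auto. } rewrite bl_add, IHn; auto. Qed.

Lemma bl_bound (A : X -> X) :
  bounded_linear A -> exists M, 0 < M /\ forall x, vnorm (A x) <= M * vnorm x.
Proof.
  intros [_ [_ [M HM]]]. exists (Rmax M 1). split; [pose proof (Rmax_r M 1); lra|].
  intros x. eapply Rle_trans; [apply HM|].
  apply Rmult_le_compat_r; [apply vnorm_nonneg|apply Rmax_l].
Qed.

Lemma bl_comp (A B : X -> X) :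
  bounded_linear A -> bounded_linear B -> bounded_linear (fun x => A (B x)).
Proof.
  intros HA HB. split; [|split].
  - intros; rewrite !bl_add; auto.
  - intros; rewrite !bl_scal; auto.
  - destruct (bl_bound A HA) as [M [HM HA']]. destruct (bl_bound B HB) as [N [HN HB']].
    exists (M * N). intros x. eapply Rle_trans; [apply HA'|].
    rewrite Rmult_assoc. apply Rmult_le_compat_l; [lra|auto].
Qed.

Lemma bl_iter (A : X -> X) n : bounded_linear A -> bounded_linear (Nat.iter n A).
Proof.
  intros H; induction n; simpl.
  - split; [|split]; auto. exists 1; intros; simpl; lra.
  - apply (bl_comp A (Nat.iter n A)); auto.
Qed.

Lemma bl_scalar_mult a : bounded_linear (fun v : X => vscal a v).
Proof.
  split; [|split].
  - intros; apply vscal_distr_v.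
  - intros; rewrite !vscal_assoc; f_equal; ring.
  - exists (Rabs a). intros; rewrite vnorm_scal; lra.
Qed.
End Norms.

(** * Calculus of vector-valued functions *)

Definition near_subset (I J : R -> Prop) (t : R) : Prop :=
  exists r, 0 < r /\ forall s, I s -> Rabs (s - t) < r -> J s.

Lemma near_subset_of_subset (I J : R -> Prop) t : (forall s, I s -> J s) -> near_subset I J t.
Proof. intros H. exists 1; split; [lra|auto]. Qed.

Lemma near_subset_weaken (I I' J J' : R -> Prop) t :
  near_subset I J t -> (forall s, I' s -> I s) -> (forall s, I' s -> J s -> J' s) -> near_subset I' J' t.
Proof. intros [r [Hr H]] HI HJ. exists r; split; auto. Qed.

Definition Rhas_deriv_at (I : R -> Prop) (c : R -> R) (c' : R) (t : R) : Prop :=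
  forall eps, 0 < eps -> exists d, 0 < d /\ forall h, Rabs h < d -> I (t + h) ->
    Rabs (c (t + h) - c t - h * c') <= eps * Rabs h.

Definition Rcontinuous_at (I : R -> Prop) (c : R -> R) (t : R) : Prop :=
  forall eps, 0 < eps -> exists d, 0 < d /\
    forall s, I s -> Rabs (s - t) < d -> Rabs (c s - c t) < eps.

Lemma Rhas_deriv_at_of_lim I c c' t : derivable_pt_lim c t c' -> Rhas_deriv_at I c c' t.
Proof.
  intros H eps He. destruct (H eps He) as [d Hd]. exists d; split; [apply cond_pos|].
  intros h Hh _. destruct (Req_dec h 0) as [->|Hn].
  - rewrite Rplus_0_r, Rabs_R0. replace (c t - c t - 0 * c') with 0 by ring. rewrite Rabs_R0; lra.
  - specialize (Hd h Hn Hh).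
    replace (c (t + h) - c t - h * c') with (h * ((c (t + h) - c t) / h - c')) by (field; auto).
    rewrite Rabs_mult, Rmult_comm. apply Rmult_le_compat_r; [apply Rabs_pos|lra].
Qed.

Lemma Rhas_deriv_at_eq_on I (c c2 : R -> R) c' t :
  I t -> (forall s, I s -> c2 s = c s) -> Rhas_deriv_at I c2 c' t -> Rhas_deriv_at I c c' t.
Proof.
  intros It E H eps He. destruct (H eps He) as [d [Hd K]]. exists d; split; auto.
  intros h Hh Ih. rewrite <- !E; auto.
Qed.

Lemma Rhas_deriv_at_small I c c' t : Rhas_deriv_at I c c' t -> forall eps, 0 < eps ->
  exists d, 0 < d /\ forall h, Rabs h < d -> I (t + h) -> Rabs (c (t + h) - c t) < eps.
Proof.
  intros H eps He. destruct (H 1 Rlt_0_1) as [d [Hd Hc]].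
  assert (HC : 0 < Rabs c' + 2) by (pose proof (Rabs_pos c'); lra).
  exists (Rmin d (eps / (Rabs c' + 2))). split; [apply Rmin_pos; auto; apply Rdiv_lt_0_compat; lra|].
  intros h Hh Ih.
  assert (Hh1 : Rabs h < d) by (eapply Rlt_le_trans; [apply Hh|apply Rmin_l]).
  assert (Hh2 : Rabs h * (Rabs c' + 2) < eps).
  { apply Rlt_le_trans with (eps / (Rabs c' + 2) * (Rabs c' + 2)); [|right; field; lra].
    apply Rmult_lt_compat_r; [lra|]. eapply Rlt_le_trans; [apply Hh|apply Rmin_r]. }
  specialize (Hc h Hh1 Ih).
  replace (c (t + h) - c t) with ((c (t + h) - c t - h * c') + h * c') by ring.
  eapply Rle_lt_trans; [apply Rabs_triang|]. rewrite Rabs_mult.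
  pose proof (Rabs_pos h). pose proof (Rabs_pos c'). nra.
Qed.

Lemma Rcontinuous_at_of_continuity_pt I c t : continuity_pt c t -> Rcontinuous_at I c t.
Proof.
  intros H eps He. destruct (H eps He) as [d [Hd K]]. exists d; split; auto.
  intros s _ Hs. destruct (Req_dec s t) as [->|Hn].
  - replace (c t - c t) with 0 by ring; rewrite Rabs_R0; auto.
  - apply (K s). split; [split; [constructor|apply not_eq_sym; auto]|auto].
Qed.

Section PointwiseCalculus.
Context {X : Banach}.
Implicit Types g k : R -> X.

Definition has_deriv_at (I : R -> Prop) (g g' : R -> X) (t : R) : Prop :=
  forall eps, 0 < eps -> exists d, 0 < d /\ forall h, Rabs h < d -> I (t + h) ->
    vnorm (vsub (vsub (g (t + h)) (g t)) (vscal h (g' t))) <= eps * Rabs h.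

Definition continuous_at (I : R -> Prop) (g : R -> X) (t : R) : Prop :=
  forall eps, 0 < eps -> exists d, 0 < d /\
    forall s, I s -> Rabs (s - t) < d -> vnorm (vsub (g s) (g t)) < eps.

Lemma continuous_on_iff I g : continuous_on I g <-> forall t, I t -> continuous_at I g t.
Proof. reflexivity. Qed.

Lemma continuous_on_at I g t : continuous_on I g -> I t -> continuous_at I g t.
Proof. intros H It. exact (H t It). Qed.

Lemma has_deriv_on_iff I g g' : has_deriv_on I g g' <-> forall t, I t -> has_deriv_at I g g' t.
Proof.
  unfold has_deriv_on, has_deriv_at; split; intros H t It eps He;
    destruct (H t It (eps / 2)) as [d [Hd Hh]]; try lra; exists d; split; auto.
  - intros h Hh1 Ih. destruct (Req_dec h 0) as [->|Hn].
    + rewrite Rplus_0_r, vscal_0_l.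
      replace (vsub (vsub (g t) (g t)) vzero) with (@vzero X) by vring.
      rewrite vnorm_0, Rabs_R0; lra.
    + specialize (Hh h Hn Hh1 Ih).
      replace (vsub (vsub (g (t + h)) (g t)) (vscal h (g' t))) with
        (vscal h (vsub (vscal (/ h) (vsub (g (t + h)) (g t))) (g' t))) by (vring; auto).
      rewrite vnorm_scal, Rmult_comm. apply Rmult_le_compat_r; [apply Rabs_pos|lra].
  - intros h Hn Hh1 Ih. specialize (Hh h Hh1 Ih).
    replace (vsub (vscal (/ h) (vsub (g (t + h)) (g t))) (g' t)) with
      (vscal (/ h) (vsub (vsub (g (t + h)) (g t)) (vscal h (g' t)))) by (vring; auto).
    rewrite vnorm_scal, Rabs_inv.
    apply Rle_lt_trans with (/ Rabs h * (eps / 2 * Rabs h)).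
    + apply Rmult_le_compat_l; auto. left; apply Rinv_0_lt_compat, Rabs_pos_lt; auto.
    + field_simplify; [lra|]. apply Rabs_no_R0; auto.
Qed.

Lemma has_deriv_at_continuous I g g' t : I t -> has_deriv_at I g g' t -> continuous_at I g t.
Proof.
  intros It H eps He. destruct (H 1 Rlt_0_1) as [d [Hd Hh]].
  set (K := vnorm (g' t) + 1). assert (HK : 0 < K) by (unfold K; pose proof (vnorm_nonneg (g' t)); lra).
  exists (Rmin d (eps / (K + 1))). split; [apply Rmin_pos; auto; apply Rdiv_lt_0_compat; lra|].
  intros s Is Hs. assert (Hs1 : Rabs (s - t) < d) by (eapply Rlt_le_trans; [apply Hs|apply Rmin_l]).
  assert (Hs2 : Rabs (s - t) * (K + 1) < eps).
  { apply Rlt_le_trans with (eps / (K + 1) * (K + 1)); [|right; field; lra].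
    apply Rmult_lt_compat_r; [lra|]. eapply Rlt_le_trans; [apply Hs|apply Rmin_r]. }
  replace s with (t + (s - t)) in Is |- * by ring. specialize (Hh _ Hs1 Is).
  replace (vsub (g (t + (s - t))) (g t)) with
    (vadd (vsub (vsub (g (t + (s - t))) (g t)) (vscal (s - t) (g' t))) (vscal (s - t) (g' t))) by vring.
  eapply Rle_lt_trans; [apply vnorm_triangle|]. rewrite vnorm_scal.
  unfold K in *. pose proof (Rabs_pos (s - t)). pose proof (vnorm_nonneg (g' t)). nra.
Qed.

Lemma has_deriv_on_continuous I g g' : has_deriv_on I g g' -> continuous_on I g.
Proof.
  rewrite has_deriv_on_iff. intros H t It. apply has_deriv_at_continuous with g'; auto.
Qed.

Lemma has_deriv_at_mono I J g g' t : has_deriv_at J g g' t -> near_subset I J t -> has_deriv_at I g g' t.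
Proof.
  intros H [r [Hr HIJ]] eps He. destruct (H eps He) as [d [Hd Hh]].
  exists (Rmin d r); split; [apply Rmin_pos; auto|].
  intros h Hh1 Ih. apply Hh; [eapply Rlt_le_trans; [apply Hh1|apply Rmin_l]|].
  apply HIJ; auto. replace (t + h - t) with h by ring. eapply Rlt_le_trans; [apply Hh1|apply Rmin_r].
Qed.

Lemma continuous_at_mono I J g t : continuous_at J g t -> near_subset I J t -> continuous_at I g t.
Proof.
  intros H [r [Hr HIJ]] eps He. destruct (H eps He) as [d [Hd Hh]].
  exists (Rmin d r); split; [apply Rmin_pos; auto|].
  intros s Is Hs. apply Hh; [apply HIJ; auto; eapply Rlt_le_trans; [apply Hs|apply Rmin_r]|].
  eapply Rlt_le_trans; [apply Hs|apply Rmin_l].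
Qed.

Lemma continuous_on_mono I J g : (forall s, J s -> I s) -> continuous_on I g -> continuous_on J g.
Proof.
  rewrite !continuous_on_iff. intros HJI H t Jt. apply continuous_at_mono with I; [apply H; auto|].
  apply near_subset_of_subset; auto.
Qed.

Lemma has_deriv_at_union A B g g' t :
  has_deriv_at A g g' t -> has_deriv_at B g g' t -> has_deriv_at (fun s => A s \/ B s) g g' t.
Proof.
  intros H1 H2 eps He. destruct (H1 eps He) as [d1 [Hd1 K1]]. destruct (H2 eps He) as [d2 [Hd2 K2]].
  exists (Rmin d1 d2); split; [apply Rmin_pos; auto|].
  intros h Hh [Ih|Ih]; [apply K1|apply K2]; auto; eapply Rlt_le_trans; eauto.
  apply Rmin_l. apply Rmin_r.
Qed.

Lemma continuous_at_union A B g t :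
  continuous_at A g t -> continuous_at B g t -> continuous_at (fun s => A s \/ B s) g t.
Proof.
  intros H1 H2 eps He. destruct (H1 eps He) as [d1 [Hd1 K1]]. destruct (H2 eps He) as [d2 [Hd2 K2]].
  exists (Rmin d1 d2); split; [apply Rmin_pos; auto|].
  intros s [Is|Is] Hs; [apply K1|apply K2]; auto; eapply Rlt_le_trans; eauto.
  apply Rmin_l. apply Rmin_r.
Qed.

Lemma has_deriv_at_eq_near I g g2 g' g2' t : I t -> near_subset I (fun s => g s = g2 s) t ->
  g' t = g2' t -> has_deriv_at I g g' t -> has_deriv_at I g2 g2' t.
Proof.
  intros It [r [Hr E]] E' H eps He. destruct (H eps He) as [d [Hd Hh]].
  exists (Rmin d r); split; [apply Rmin_pos; auto|].
  intros h Hh1 Ih. rewrite <- E', <- !E; auto.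
  - apply Hh; auto. eapply Rlt_le_trans; [apply Hh1|apply Rmin_l].
  - replace (t - t) with 0 by ring; rewrite Rabs_R0; auto.
  - replace (t + h - t) with h by ring. eapply Rlt_le_trans; [apply Hh1|apply Rmin_r].
Qed.

Lemma continuous_at_eq_near I g g2 t : I t -> near_subset I (fun s => g s = g2 s) t ->
  continuous_at I g t -> continuous_at I g2 t.
Proof.
  intros It [r [Hr E]] H eps He. destruct (H eps He) as [d [Hd Hh]].
  exists (Rmin d r); split; [apply Rmin_pos; auto|].
  intros s Is Hs. rewrite <- !E; auto.
  - apply Hh; auto. eapply Rlt_le_trans; [apply Hs|apply Rmin_l].
  - replace (t - t) with 0 by ring; rewrite Rabs_R0; auto.
  - eapply Rlt_le_trans; [apply Hs|apply Rmin_r].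
Qed.

Lemma has_deriv_at_ext I g g2 g' g2' t : (forall s, g s = g2 s) -> (forall s, g' s = g2' s) ->
  has_deriv_at I g g' t -> has_deriv_at I g2 g2' t.
Proof.
  intros E E' H eps He. destruct (H eps He) as [d [Hd K]]. exists d; split; auto.
  intros h Hh Ih. rewrite <- !E, <- E'. auto.
Qed.

Lemma continuous_at_ext I g g2 t : (forall s, g s = g2 s) -> continuous_at I g t -> continuous_at I g2 t.
Proof.
  intros E H eps He. destruct (H eps He) as [d [Hd K]]. exists d; split; auto.
  intros s Is Hs. rewrite <- !E. auto.
Qed.

Lemma has_deriv_at_add I g k g' k' t : has_deriv_at I g g' t -> has_deriv_at I k k' t ->
  has_deriv_at I (fun s => vadd (g s) (k s)) (fun s => vadd (g' s) (k' s)) t.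
Proof.
  intros H1 H2 eps He.
  destruct (H1 (eps/2)) as [d1 [Hd1 K1]]; [lra|]. destruct (H2 (eps/2)) as [d2 [Hd2 K2]]; [lra|].
  exists (Rmin d1 d2); split; [apply Rmin_pos; auto|].
  intros h Hh Ih. specialize (K1 h ltac:(eapply Rlt_le_trans; [apply Hh|apply Rmin_l]) Ih).
  specialize (K2 h ltac:(eapply Rlt_le_trans; [apply Hh|apply Rmin_r]) Ih).
  replace (vsub (vsub (vadd (g (t + h)) (k (t + h))) (vadd (g t) (k t))) (vscal h (vadd (g' t) (k' t))))
   with (vadd (vsub (vsub (g (t + h)) (g t)) (vscal h (g' t))) (vsub (vsub (k (t + h)) (k t)) (vscal h (k' t))))
   by (rewrite vscal_distr_v; vring).
  eapply Rle_trans; [apply vnorm_triangle|lra].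
Qed.

Lemma has_deriv_at_bl I (A : X -> X) g g' t : bounded_linear A -> has_deriv_at I g g' t ->
  has_deriv_at I (fun s => A (g s)) (fun s => A (g' s)) t.
Proof.
  intros HA H eps He. destruct (bl_bound A HA) as [M [HM HAM]].
  destruct (H (eps / M)) as [d [Hd K]]; [apply Rdiv_lt_0_compat; auto|].
  exists d; split; auto. intros h Hh Ih. specialize (K h Hh Ih).
  rewrite <- bl_scal, <- !bl_sub by auto. eapply Rle_trans; [apply HAM|].
  apply Rle_trans with (M * (eps / M * Rabs h)); [apply Rmult_le_compat_l; lra|].
  right; field; lra.
Qed.

Lemma has_deriv_at_scal I g g' t a : has_deriv_at I g g' t ->
  has_deriv_at I (fun s => vscal a (g s)) (fun s => vscal a (g' s)) t.
Proof. apply has_deriv_at_bl, bl_scalar_mult. Qed.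

Lemma has_deriv_at_opp I g g' t : has_deriv_at I g g' t ->
  has_deriv_at I (fun s => vopp (g s)) (fun s => vopp (g' s)) t.
Proof.
  intros H. apply has_deriv_at_ext with (fun s => vscal (-1) (g s)) (fun s => vscal (-1) (g' s));
    try (intros; symmetry; apply vopp_as_scal).
  now apply has_deriv_at_scal.
Qed.

Lemma has_deriv_at_sub I g k g' k' t : has_deriv_at I g g' t -> has_deriv_at I k k' t ->
  has_deriv_at I (fun s => vsub (g s) (k s)) (fun s => vsub (g' s) (k' s)) t.
Proof. intros; apply has_deriv_at_add; auto; apply has_deriv_at_opp; auto. Qed.

Lemma has_deriv_at_const I (v : X) t : has_deriv_at I (fun _ => v) (fun _ => vzero) t.
Proof.
  intros eps He. exists 1; split; [lra|]. intros h _ _.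
  replace (vsub (vsub v v) (vscal h vzero)) with (@vzero X) by (rewrite vscal_0_r; vring).
  rewrite vnorm_0. pose proof (Rabs_pos h); nra.
Qed.

Lemma has_deriv_at_linear I (v : X) t : has_deriv_at I (fun s => vscal s v) (fun _ => v) t.
Proof.
  intros eps He. exists 1; split; [lra|]. intros h _ _.
  replace (vsub (vsub (vscal (t + h) v) (vscal t v)) (vscal h v)) with (@vzero X) by vring.
  rewrite vnorm_0. pose proof (Rabs_pos h); nra.
Qed.

Lemma has_deriv_at_vsum I n (g g' : nat -> R -> X) t :
  (forall i, (i < n)%nat -> has_deriv_at I (g i) (g' i) t) ->
  has_deriv_at I (fun s => vsum n (fun i => g i s)) (fun s => vsum n (fun i => g' i s)) t.
Proof.
  induction n; intros H; simpl; [apply has_deriv_at_const|].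
  apply (has_deriv_at_add I (fun s => vsum n (fun i => g i s)) (g n)); auto.
Qed.

Lemma vnorm_mul_increment (c0 c1 c' h : R) (g0 g1 g' : X) :
  vnorm (vsub (vsub (vscal c1 g1) (vscal c0 g0)) (vscal h (vadd (vscal c' g0) (vscal c0 g'))))
  <= Rabs c1 * vnorm (vsub (vsub g1 g0) (vscal h g')) + Rabs h * (Rabs (c1 - c0) * vnorm g')
     + Rabs (c1 - c0 - h * c') * vnorm g0.
Proof.
  replace (vsub (vsub (vscal c1 g1) (vscal c0 g0)) (vscal h (vadd (vscal c' g0) (vscal c0 g'))))
    with (vadd (vadd (vscal c1 (vsub (vsub g1 g0) (vscal h g'))) (vscal (h * (c1 - c0)) g'))
               (vscal (c1 - c0 - h * c') g0)) by vring.
  eapply Rle_trans; [apply vnorm_triangle|].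
  eapply Rle_trans; [apply Rplus_le_compat_r, vnorm_triangle|].
  rewrite !vnorm_scal, Rabs_mult. lra.
Qed.

Lemma has_deriv_at_mul I (c : R -> R) c' g g' t : Rhas_deriv_at I c c' t -> has_deriv_at I g g' t ->
  has_deriv_at I (fun s => vscal (c s) (g s)) (fun s => vadd (vscal c' (g s)) (vscal (c s) (g' s))) t.
Proof.
  intros Hc Hg eps He.
  set (A := Rabs (c t) + 1). set (B := vnorm (g' t) + 1). set (C := vnorm (g t) + 1).
  assert (HA : 0 < A) by (unfold A; pose proof (Rabs_pos (c t)); lra).
  assert (HB : 0 < B) by (unfold B; pose proof (vnorm_nonneg (g' t)); lra).
  assert (HC : 0 < C) by (unfold C; pose proof (vnorm_nonneg (g t)); lra).
  destruct (Rhas_deriv_at_small I c c' t Hc (Rmin 1 (eps / (3 * B)))) as [d1 [Hd1 K1]].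
  { apply Rmin_pos; [lra|apply Rdiv_lt_0_compat; lra]. }
  destruct (Hg (eps / (3 * A))) as [d2 [Hd2 K2]]; [apply Rdiv_lt_0_compat; lra|].
  destruct (Hc (eps / (3 * C))) as [d3 [Hd3 K3]]; [apply Rdiv_lt_0_compat; lra|].
  exists (Rmin d1 (Rmin d2 d3)). split; [repeat apply Rmin_pos; auto|].
  intros h Hh Ih. pose proof (Rmin_l d1 (Rmin d2 d3)). pose proof (Rmin_r d1 (Rmin d2 d3)).
  pose proof (Rmin_l d2 d3). pose proof (Rmin_r d2 d3).
  specialize (K1 h ltac:(lra) Ih). specialize (K2 h ltac:(lra) Ih). specialize (K3 h ltac:(lra) Ih).
  eapply Rle_trans; [apply vnorm_mul_increment|].
  set (Dg := vsub (vsub (g (t + h)) (g t)) (vscal h (g' t))) in *.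
  set (dc := c (t + h) - c t) in *.
  pose proof (Rmin_l 1 (eps / (3 * B))). pose proof (Rmin_r 1 (eps / (3 * B))).
  pose proof (vnorm_nonneg Dg). pose proof (Rabs_pos h). pose proof (Rabs_pos dc).
  assert (T1 : Rabs (c (t + h)) * vnorm Dg <= eps / 3 * Rabs h).
  { assert (Rabs (c (t + h)) <= A).
    { unfold A. replace (c (t + h)) with (c t + dc) by (unfold dc; ring).
      eapply Rle_trans; [apply Rabs_triang|lra]. }
    apply Rle_trans with (A * (eps / (3 * A) * Rabs h)); [apply Rmult_le_compat; auto; apply Rabs_pos|].
    right; field; lra. }
  assert (T2 : Rabs dc * vnorm (g' t) <= eps / 3).
  { apply Rle_trans with (eps / (3 * B) * B); [apply Rmult_le_compat; try apply vnorm_nonneg; try lra; unfold B; lra|].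
    right; field; lra. }
  assert (T3 : Rabs (dc - h * c') * vnorm (g t) <= eps / 3 * Rabs h).
  { apply Rle_trans with (eps / (3 * C) * Rabs h * C).
    - apply Rmult_le_compat; auto; [apply Rabs_pos|apply vnorm_nonneg|unfold C; lra].
    - right; field; lra. }
  assert (Rabs h * (Rabs dc * vnorm (g' t)) <= Rabs h * (eps / 3)) by (apply Rmult_le_compat_l; auto).
  lra.
Qed.

Lemma has_deriv_at_unique I g g1 g2 t : has_deriv_at I g g1 t -> has_deriv_at I g g2 t ->
  (forall d, 0 < d -> exists h, h <> 0 /\ Rabs h < d /\ I (t + h)) -> g1 t = g2 t.
Proof.
  intros H1 H2 HI. apply veq_of_small_dist. intros eps He.
  destruct (H1 (eps / 4)) as [d1 [Hd1 K1]]; [lra|]. destruct (H2 (eps / 4)) as [d2 [Hd2 K2]]; [lra|].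
  destruct (HI (Rmin d1 d2)) as [h [Hn [Hh Ih]]]; [apply Rmin_pos; auto|].
  specialize (K1 h ltac:(eapply Rlt_le_trans; [apply Hh|apply Rmin_l]) Ih).
  specialize (K2 h ltac:(eapply Rlt_le_trans; [apply Hh|apply Rmin_r]) Ih).
  assert (N : Rabs h * vnorm (vsub (g1 t) (g2 t)) <= eps / 2 * Rabs h).
  { rewrite <- vnorm_scal.
    replace (vscal h (vsub (g1 t) (g2 t))) with
      (vsub (vsub (vsub (g (t + h)) (g t)) (vscal h (g2 t))) (vsub (vsub (g (t + h)) (g t)) (vscal h (g1 t))))
      by vring.
    eapply Rle_trans; [apply vnorm_sub_le|lra]. }
  assert (0 < Rabs h) by (apply Rabs_pos_lt; auto).
  assert (vnorm (vsub (g1 t) (g2 t)) <= eps / 2) by (apply Rmult_le_reg_l with (Rabs h); lra).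
  lra.
Qed.

Lemma continuous_at_const I (v : X) t : continuous_at I (fun _ => v) t.
Proof.
  intros eps He. exists 1; split; [lra|]. intros.
  replace (vsub v v) with (@vzero X) by vring. rewrite vnorm_0; auto.
Qed.

Lemma continuous_at_add I g k t : continuous_at I g t -> continuous_at I k t ->
  continuous_at I (fun s => vadd (g s) (k s)) t.
Proof.
  intros H1 H2 eps He.
  destruct (H1 (eps/2)) as [d1 [Hd1 K1]]; [lra|]. destruct (H2 (eps/2)) as [d2 [Hd2 K2]]; [lra|].
  exists (Rmin d1 d2); split; [apply Rmin_pos; auto|].
  intros s Is Hs. specialize (K1 s Is ltac:(eapply Rlt_le_trans; [apply Hs|apply Rmin_l])).
  specialize (K2 s Is ltac:(eapply Rlt_le_trans; [apply Hs|apply Rmin_r])).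
  replace (vsub (vadd (g s) (k s)) (vadd (g t) (k t))) with
    (vadd (vsub (g s) (g t)) (vsub (k s) (k t))) by vring.
  eapply Rle_lt_trans; [apply vnorm_triangle|lra].
Qed.

Lemma continuous_at_bl I (A : X -> X) g t : bounded_linear A -> continuous_at I g t ->
  continuous_at I (fun s => A (g s)) t.
Proof.
  intros HA H eps He. destruct (bl_bound A HA) as [M [HM HAM]].
  destruct (H (eps / M)) as [d [Hd K]]; [apply Rdiv_lt_0_compat; auto|].
  exists d; split; auto. intros s Is Hs. rewrite <- bl_sub by auto.
  eapply Rle_lt_trans; [apply HAM|].
  apply Rlt_le_trans with (M * (eps / M)); [apply Rmult_lt_compat_l; auto|right; field; lra].
Qed.

Lemma continuous_at_sub I g k t : continuous_at I g t -> continuous_at I k t ->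
  continuous_at I (fun s => vsub (g s) (k s)) t.
Proof.
  intros Hg Hk. apply continuous_at_add; auto.
  apply continuous_at_ext with (fun s => vscal (-1) (k s)); [intros; symmetry; apply vopp_as_scal|].
  apply continuous_at_bl; auto. apply bl_scalar_mult.
Qed.

Lemma continuous_at_mul I (c : R -> R) g t : Rcontinuous_at I c t -> continuous_at I g t ->
  continuous_at I (fun s => vscal (c s) (g s)) t.
Proof.
  intros Hc Hg eps He.
  set (A := Rabs (c t) + 2). set (C := vnorm (g t) + 1).
  assert (HA : 0 < A) by (unfold A; pose proof (Rabs_pos (c t)); lra).
  assert (HC : 0 < C) by (unfold C; pose proof (vnorm_nonneg (g t)); lra).
  destruct (Hc (Rmin 1 (eps / (2 * C)))) as [d1 [Hd1 K1]].
  { apply Rmin_pos; [lra|apply Rdiv_lt_0_compat; lra]. }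
  destruct (Hg (eps / (2 * A))) as [d2 [Hd2 K2]]; [apply Rdiv_lt_0_compat; lra|].
  exists (Rmin d1 d2); split; [apply Rmin_pos; auto|].
  intros s Is Hs. specialize (K1 s Is ltac:(eapply Rlt_le_trans; [apply Hs|apply Rmin_l])).
  specialize (K2 s Is ltac:(eapply Rlt_le_trans; [apply Hs|apply Rmin_r])).
  pose proof (Rmin_l 1 (eps / (2 * C))). pose proof (Rmin_r 1 (eps / (2 * C))).
  replace (vsub (vscal (c s) (g s)) (vscal (c t) (g t))) with
    (vadd (vscal (c s) (vsub (g s) (g t))) (vscal (c s - c t) (g t))) by vring.
  eapply Rle_lt_trans; [apply vnorm_triangle|]. rewrite !vnorm_scal.
  assert (Ec : Rabs (c s) <= A).
  { unfold A. replace (c s) with (c t + (c s - c t)) by ring.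
    eapply Rle_trans; [apply Rabs_triang|lra]. }
  assert (T1 : Rabs (c s) * vnorm (vsub (g s) (g t)) < eps / 2).
  { apply Rle_lt_trans with (A * vnorm (vsub (g s) (g t)));
      [apply Rmult_le_compat_r; auto; apply vnorm_nonneg|].
    apply Rlt_le_trans with (A * (eps / (2 * A))); [apply Rmult_lt_compat_l; auto|right; field; lra]. }
  assert (T2 : Rabs (c s - c t) * vnorm (g t) < eps / 2).
  { apply Rle_lt_trans with (Rabs (c s - c t) * C);
      [apply Rmult_le_compat_l; [apply Rabs_pos|unfold C; lra]|].
    apply Rlt_le_trans with (eps / (2 * C) * C); [apply Rmult_lt_compat_r; lra|right; field; lra]. }
  lra.
Qed.

Lemma continuous_at_vsum I n (g : nat -> R -> X) t :
  (forall i, (i < n)%nat -> continuous_at I (g i) t) ->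
  continuous_at I (fun s => vsum n (fun i => g i s)) t.
Proof.
  induction n; intros H; simpl; [apply continuous_at_const|].
  apply (continuous_at_add I (fun s => vsum n (fun i => g i s)) (g n)); auto.
Qed.

Lemma continuous_at_comp I J g (u : R -> R) t : (forall s, I s -> J (u s)) ->
  Rcontinuous_at I u t -> continuous_at J g (u t) -> continuous_at I (fun s => g (u s)) t.
Proof.
  intros HIJ Hu Hg eps He. destruct (Hg eps He) as [d [Hd K]]. destruct (Hu d Hd) as [d' [Hd' K']].
  exists d'; split; auto.
Qed.

Lemma has_deriv_at_glue a c g g' t : a <= c -> a <= t ->
  (t <= c -> has_deriv_at (Icc a c) g g' t) -> (c <= t -> has_deriv_at (Ici c) g g' t) ->
  has_deriv_at (Ici a) g g' t.
Proof.
  intros Hac Hat H1 H2. destruct (Rtotal_order t c) as [Hl|[He|Hg]].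
  - apply has_deriv_at_mono with (Icc a c); [apply H1; lra|]. exists (c - t); split; [lra|].
    unfold Icc, Ici; intros s Hs Hst. apply Rabs_def2 in Hst. lra.
  - apply has_deriv_at_mono with (fun s => Icc a c s \/ Ici c s).
    + apply has_deriv_at_union; [apply H1|apply H2]; lra.
    + apply near_subset_of_subset. unfold Icc, Ici; intros s Hs. destruct (Rle_dec s c); [left|right]; lra.
  - apply has_deriv_at_mono with (Ici c); [apply H2; lra|]. exists (t - c); split; [lra|].
    unfold Ici; intros s Hs Hst. apply Rabs_def2 in Hst. lra.
Qed.

Lemma continuous_at_glue a c g t : a <= c -> a <= t ->
  (t <= c -> continuous_at (Icc a c) g t) -> (c <= t -> continuous_at (Ici c) g t) ->
  continuous_at (Ici a) g t.
Proof.
  intros Hac Hat H1 H2. destruct (Rtotal_order t c) as [Hl|[He|Hg]].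
  - apply continuous_at_mono with (Icc a c); [apply H1; lra|]. exists (c - t); split; [lra|].
    unfold Icc, Ici; intros s Hs Hst. apply Rabs_def2 in Hst. lra.
  - apply continuous_at_mono with (fun s => Icc a c s \/ Ici c s).
    + apply continuous_at_union; [apply H1|apply H2]; lra.
    + apply near_subset_of_subset. unfold Icc, Ici; intros s Hs. destruct (Rle_dec s c); [left|right]; lra.
  - apply continuous_at_mono with (Ici c); [apply H2; lra|]. exists (t - c); split; [lra|].
    unfold Ici; intros s Hs Hst. apply Rabs_def2 in Hst. lra.
Qed.
End PointwiseCalculus.

Lemma Rle_of_le_plus_eps x y : (forall e, 0 < e -> x <= y + e) -> x <= y.
Proof. intros H. destruct (Rle_lt_dec x y); auto. specialize (H ((x - y) / 2)). lra. Qed.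

Lemma real_induction (P : R -> Prop) a b : a <= b ->
  (forall c, a <= c <= b -> (forall u, a <= u < c -> P u) -> P c) ->
  (forall c, a <= c < b -> (forall u, a <= u <= c -> P u) ->
     exists d, 0 < d /\ forall u, c < u < c + d -> u <= b -> P u) ->
  forall u, a <= u <= b -> P u.
Proof.
  intros Hab Hleft Hright.
  set (E := fun s => a <= s <= b /\ forall u, a <= u <= s -> P u).
  assert (Ea : E a).
  { split; [lra|]. intros u Hu. replace u with a by lra. apply Hleft; [lra|]. intros; lra. }
  destruct (completeness E) as [c [Hub Hlub]]; [exists b; intros s [Hs _]; lra|exists a; auto|].
  assert (Hac : a <= c) by (apply Hub; auto).
  assert (Hcb : c <= b) by (apply Hlub; intros s [Hs _]; lra).
  assert (Below : forall u, a <= u < c -> P u).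
  { intros u Hu. destruct (classic (exists s, E s /\ u < s)) as [[s [[_ Es] Hs]]|Hn]; [apply Es; lra|].
    assert (c <= u); [|lra]. apply Hlub. intros s Es. apply Rnot_lt_le. intros Hsu. eauto. }
  assert (Upto : forall u, a <= u <= c -> P u).
  { intros u Hu. destruct (Req_dec u c) as [->|]; [apply Hleft; auto; lra|apply Below; lra]. }
  assert (c = b) as <-; [|intros; apply Upto; lra].
  destruct (Req_dec c b) as [|Hne]; auto. exfalso.
  destruct (Hright c ltac:(lra) Upto) as [d [Hd Hext]].
  pose proof (Rmin_l (c + d / 2) b). pose proof (Rmin_r (c + d / 2) b). set (s := Rmin (c + d / 2) b) in *.
  assert (Hcs : c < s) by (apply Rmin_glb_lt; lra).
  assert (Es : E s).
  { split; [split; lra|]. intros u Hu. destruct (Rle_dec u c); [apply Upto; lra|apply Hext; [split|]; lra]. }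
  pose proof (Hub s Es). lra.
Qed.

Section MeanValueInequality.
Context {X : Banach}.

Lemma mean_value_ineq_eta (H H' : R -> X) a b M eta : a <= b -> 0 < eta ->
  (forall s, a <= s <= b -> has_deriv_at (Icc a b) H H' s) ->
  (forall s, a <= s <= b -> vnorm (H' s) <= M) ->
  vnorm (vsub (H b) (H a)) <= (M + eta) * (b - a) + eta.
Proof.
  intros Hab He HD HM.
  assert (M0 : 0 <= M) by (apply Rle_trans with (vnorm (H' a)); [apply vnorm_nonneg|apply HM; lra]).
  apply (real_induction (fun u => vnorm (vsub (H u) (H a)) <= (M + eta) * (u - a) + eta) a b);
    [auto| | |split; lra].
  - intros c Hc Below. destruct (Req_dec c a) as [->|Hca].
    { replace (vsub (H a) (H a)) with (@vzero X) by vring. rewrite vnorm_0. lra. }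
    apply Rle_of_le_plus_eps. intros e Hep.
    destruct (has_deriv_at_continuous (Icc a b) H H' c ltac:(unfold Icc; lra) (HD c Hc) e Hep)
      as [d [Hd K]].
    pose proof (Rmax_l a (c - d / 2)). pose proof (Rmax_r a (c - d / 2)). set (u := Rmax a (c - d / 2)) in *.
    assert (Hu : u < c) by (apply Rmax_lub_lt; lra).
    specialize (K u ltac:(unfold Icc; lra) ltac:(rewrite Rabs_left; lra)).
    specialize (Below u ltac:(lra)).
    eapply Rle_trans; [apply (vnorm_sub_triangle _ (H u))|]. rewrite vnorm_sub_comm.
    assert ((M + eta) * (u - a) <= (M + eta) * (c - a)) by (apply Rmult_le_compat_l; lra).
    lra.
  - intros c Hc Upto. destruct (HD c ltac:(lra) eta He) as [d [Hd K]].
    exists d; split; auto. intros u Hu Hub.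
    specialize (K (u - c) ltac:(rewrite Rabs_right; lra) ltac:(unfold Icc; lra)).
    replace (c + (u - c)) with u in K by ring.
    replace (vsub (H u) (H a)) with
      (vadd (vsub (vsub (H u) (H c)) (vscal (u - c) (H' c))) (vadd (vscal (u - c) (H' c)) (vsub (H c) (H a))))
      by vring.
    eapply Rle_trans; [apply vnorm_triangle|].
    eapply Rle_trans; [apply Rplus_le_compat_l, vnorm_triangle|].
    rewrite vnorm_scal. rewrite Rabs_right in * by lra.
    specialize (Upto c ltac:(lra)).
    assert ((u - c) * vnorm (H' c) <= (u - c) * M) by (apply Rmult_le_compat_l; [lra|apply HM; lra]).
    nra.
Qed.

Lemma mean_value_ineq (H H' : R -> X) a b M : a <= b ->
  (forall s, a <= s <= b -> has_deriv_at (Icc a b) H H' s) ->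
  (forall s, a <= s <= b -> vnorm (H' s) <= M) ->
  vnorm (vsub (H b) (H a)) <= M * (b - a).
Proof.
  intros Hab HD HM. apply Rle_of_le_plus_eps. intros e He.
  set (eta := e / (b - a + 2)). assert (Het : 0 < eta) by (apply Rdiv_lt_0_compat; lra).
  eapply Rle_trans; [apply (mean_value_ineq_eta H H' a b M eta); auto|].
  assert (eta * (b - a + 1) <= e).
  { apply Rle_trans with (eta * (b - a + 2)); [apply Rmult_le_compat_l; lra|].
    right; unfold eta; field; lra. }
  nra.
Qed.

Lemma uniform_continuity (g : R -> X) a b : a <= b -> continuous_on (Icc a b) g ->
  forall eps, 0 < eps -> exists d, 0 < d /\ forall u v, a <= u <= b -> a <= v <= b ->
    Rabs (u - v) < d -> vnorm (vsub (g u) (g v)) <= eps.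
Proof.
  intros Hab Hc eps He.
  set (P := fun s => exists d, 0 < d /\ forall u v, a <= u <= s -> a <= v <= s -> Rabs (u - v) < d ->
    vnorm (vsub (g u) (g v)) <= eps).
  assert (Pdown : forall s s', s' <= s -> P s -> P s').
  { intros s s' Hs [d [Hd K]]. exists d; split; auto. intros u v Hu Hv. apply K; lra. }
  (* A point c splices a good stretch [a, s] reaching into (c - r, c] with the
     neighbourhood of c where g oscillates by less than eps. *)
  assert (Splice : forall c, a <= c <= b -> exists r, 0 < r /\
            forall s, a <= s -> c - r < s -> P s -> P (Rmin b (c + r))).
  { intros c Hc'. destruct (Hc c ltac:(unfold Icc; lra) (eps / 2) ltac:(lra)) as [dc [Hdc Kc]].
    exists (dc / 2); split; [lra|]. intros s Has Hs [ds [Hds Ks]].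
    pose proof (Rmin_l b (c + dc / 2)). pose proof (Rmin_r b (c + dc / 2)).
    exists (Rmin ds (dc / 2)). split; [apply Rmin_pos; lra|].
    intros u v Hu Hv Huv. pose proof (Rmin_l ds (dc / 2)). pose proof (Rmin_r ds (dc / 2)).
    apply Rabs_def2 in Huv.
    destruct (Rle_dec u s), (Rle_dec v s); [apply Ks; auto; try lra; apply Rabs_def1; lra| | |];
      (eapply Rle_trans; [apply (vnorm_sub_triangle _ (g c))|]);
      rewrite (vnorm_sub_comm (g c));
      (assert (vnorm (vsub (g u) (g c)) < eps / 2) by (apply Kc; [unfold Icc; lra|apply Rabs_def1; lra]));
      (assert (vnorm (vsub (g v) (g c)) < eps / 2) by (apply Kc; [unfold Icc; lra|apply Rabs_def1; lra]));
      lra. }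
  assert (Pb : P b).
  { apply (real_induction P a b); [auto| | |split; lra].
    - intros c Hcab Below. destruct (Req_dec c a) as [->|Hca].
      { exists 1; split; [lra|]. intros u v Hu Hv _. replace u with a by lra; replace v with a by lra.
        replace (vsub (g a) (g a)) with (@vzero X) by vring. rewrite vnorm_0; lra. }
      destruct (Splice c Hcab) as [r [Hr Sp]].
      pose proof (Rmax_l a (c - r / 2)). pose proof (Rmax_r a (c - r / 2)). set (s := Rmax a (c - r / 2)) in *.
      apply Pdown with (Rmin b (c + r)); [apply Rmin_glb; lra|].
      apply Sp with s; [lra|lra|apply Below; split; [lra|apply Rmax_lub_lt; lra]].
    - intros c Hcab Upto. destruct (Splice c ltac:(lra)) as [r [Hr Sp]].
      exists r; split; auto. intros u Hu Hub. apply Pdown with (Rmin b (c + r)); [apply Rmin_glb; lra|].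
      apply Sp with c; [lra|lra|]. apply Upto; lra. }
  destruct Pb as [d [Hd K]]. exists d; split; auto.
Qed.
End MeanValueInequality.

(** * The Riemann integral *)

Definition tagged_partition (a b d : R) (n : nat) (p xi : nat -> R) : Prop :=
  p O = a /\ p n = b /\ (forall i, (i < n)%nat -> p i <= xi i <= p (S i) /\ p (S i) - p i < d).

Section Partitions.
Variables (a b d : R) (n : nat) (p xi : nat -> R).
Hypothesis HP : tagged_partition a b d n p xi.

Lemma tagged_partition_mono i j : (i <= j <= n)%nat -> p i <= p j.
Proof.
  destruct HP as [_ [_ H]]. induction j; intros Hij; [replace i with O by lia; lra|].
  destruct (Nat.eq_dec i (S j)) as [->|]; [lra|].
  eapply Rle_trans; [apply IHj; lia|]. destruct (H j ltac:(lia)); lra.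
Qed.

Lemma tagged_partition_point i : (i <= n)%nat -> a <= p i <= b.
Proof.
  intros Hi. destruct HP as [H0 [Hn _]].
  rewrite <- H0, <- Hn. split; apply tagged_partition_mono; lia.
Qed.

Lemma tagged_partition_tag i : (i < n)%nat -> a <= xi i <= b.
Proof.
  intros Hi. pose proof (tagged_partition_point i ltac:(lia)).
  pose proof (tagged_partition_point (S i) ltac:(lia)).
  destruct HP as [_ [_ Hstep]]. destruct (Hstep i Hi). lra.
Qed.

Lemma tagged_partition_weaken d' : d <= d' -> tagged_partition a b d' n p xi.
Proof.
  intros Hd. destruct HP as [H0 [H1 H2]]. split; [|split]; auto.
  intros i Hi. destruct (H2 i Hi). split; auto; lra.
Qed.
End Partitions.

Definition uniform_partition (a b : R) (n : nat) (i : nat) : R := a + INR i * ((b - a) / INR n).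

Lemma uniform_partition_tagged a b n d : a <= b -> (0 < n)%nat -> (b - a) / INR n < d ->
  tagged_partition a b d n (uniform_partition a b n) (uniform_partition a b n).
Proof.
  intros Hab Hn Hd. assert (0 < INR n) by (apply lt_0_INR; lia).
  assert (0 <= (b - a) / INR n) by (apply Rmult_le_pos; [lra|left; apply Rinv_0_lt_compat; auto]).
  unfold uniform_partition. split; [simpl; ring|]. split; [field; lra|].
  intros i Hi. rewrite S_INR. split; [|lra]. split; nra.
Qed.

Lemma uniform_partition_fine a b d : a <= b -> 0 < d ->
  exists N, forall n, (N <= n)%nat -> (0 < n)%nat /\ (b - a) / INR n < d.
Proof.
  intros Hab Hd. destruct (archimed ((b - a) / d)) as [H1 _].
  assert (0 <= (b - a) / d) by (apply Rmult_le_pos; [lra|left; apply Rinv_0_lt_compat; auto]).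
  exists (S (Z.to_nat (up ((b - a) / d)))). intros n Hn. split; [lia|].
  assert (Hk : (b - a) / d < INR n).
  { apply Rlt_le_trans with (INR (S (Z.to_nat (up ((b - a) / d))))); [|apply le_INR; auto].
    rewrite S_INR, INR_IZR_INZ, Z2Nat.id; [lra|]. apply le_IZR. lra. }
  apply Rmult_lt_reg_r with (INR n / d); [apply Rdiv_lt_0_compat; lra|].
  replace ((b - a) / INR n * (INR n / d)) with ((b - a) / d) by (field; lra).
  replace (d * (INR n / d)) with (INR n) by (field; lra). lra.
Qed.

Lemma uniform_partition_exists a b d : a <= b -> 0 < d ->
  exists n, tagged_partition a b d n (uniform_partition a b n) (uniform_partition a b n).
Proof.
  intros Hab Hd. destruct (uniform_partition_fine a b d Hab Hd) as [N HN].
  exists (S N). destruct (HN (S N)) as [Hn Hs]; [lia|]. apply uniform_partition_tagged; auto.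
Qed.

Definition overlap (x y u v : R) : R := Rmax 0 (Rmin y v - Rmax x u).

Ltac unfold_minmax := unfold overlap, Rmax, Rmin in *;
  repeat match goal with
  | |- context [Rle_dec ?p ?q] => destruct (Rle_dec p q)
  | H : context [Rle_dec ?p ?q] |- _ => destruct (Rle_dec p q)
  end.

Lemma overlap_split x y c d e : x <= y -> c <= d <= e -> overlap x y c e = overlap x y c d + overlap x y d e.
Proof. intros. unfold_minmax; lra. Qed.

Lemma overlap_inside x y c d : c <= x -> x <= y -> y <= d -> overlap x y c d = y - x.
Proof. intros. unfold_minmax; lra. Qed.

Lemma overlap_comm x y u v : overlap x y u v = overlap u v x y.
Proof. unfold overlap. now rewrite (Rmin_comm y v), (Rmax_comm x u). Qed.

Lemma overlap_nonneg x y u v : 0 <= overlap x y u v.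
Proof. apply Rmax_l. Qed.

Lemma overlap_pos_near x y u v s t : x <= s <= y -> u <= t <= v -> 0 < overlap x y u v ->
  Rabs (s - t) <= (y - x) + (v - u).
Proof. intros. apply Rabs_le. unfold_minmax; lra. Qed.

Lemma overlap_partition_sum x y a b d m q eta : x <= y -> a <= x -> y <= b ->
  tagged_partition a b d m q eta -> rsum m (fun j => overlap x y (q j) (q (S j))) = y - x.
Proof.
  intros Hxy Hax Hyb HP. rewrite <- (overlap_inside x y a b) by auto.
  pose proof (tagged_partition_mono _ _ _ _ _ _ HP) as Mo. destruct HP as [H0 [Hm _]].
  rewrite <- H0, <- Hm. clear H0 Hm Hax Hyb. induction m; simpl; [unfold_minmax; lra|].
  rewrite IHm by (intros; apply Mo; lia). rewrite <- overlap_split; auto. split; apply Mo; lia.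
Qed.

Section RiemannIntegral.
Context {X : Banach}.
Implicit Types g k : R -> X.

Definition riemann_sum g n (p xi : nat -> R) : X :=
  vsum n (fun i => vscal (p (S i) - p i) (g (xi i))).

Lemma is_RInt_iff g a b I : is_RInt g a b I <-> forall eps, 0 < eps -> exists d, 0 < d /\
  forall n p xi, tagged_partition a b d n p xi -> vnorm (vsub (riemann_sum g n p xi) I) < eps.
Proof.
  unfold is_RInt, tagged_partition, riemann_sum.
  split; intros H eps He; destruct (H eps He) as [d [Hd K]]; exists d; split; auto.
  intros n p xi [H0 [H1 H2]]. auto.
Qed.

Lemma is_RInt_unique g a b I J : a <= b -> is_RInt g a b I -> is_RInt g a b J -> I = J.
Proof.
  intros Hab HI HJ. rewrite is_RInt_iff in HI, HJ. apply veq_of_small_dist. intros eps He.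
  destruct (HI (eps / 2)) as [d1 [Hd1 K1]]; [lra|]. destruct (HJ (eps / 2)) as [d2 [Hd2 K2]]; [lra|].
  destruct (uniform_partition_exists a b (Rmin d1 d2) Hab ltac:(apply Rmin_pos; auto)) as [n HP].
  specialize (K1 _ _ _ (tagged_partition_weaken _ _ _ _ _ _ HP _ (Rmin_l d1 d2))).
  specialize (K2 _ _ _ (tagged_partition_weaken _ _ _ _ _ _ HP _ (Rmin_r d1 d2))).
  eapply Rle_lt_trans; [apply (vnorm_sub_triangle _ (riemann_sum g n (uniform_partition a b n) (uniform_partition a b n)))|].
  rewrite vnorm_sub_comm. lra.
Qed.

(* Every Riemann sum over [a, b] is a double sum over the cells of its common
   refinement with any other partition of [a, b]. *)
Lemma riemann_sum_refine g a b d d' n p xi m q eta :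
  tagged_partition a b d n p xi -> tagged_partition a b d' m q eta ->
  riemann_sum g n p xi =
  vsum n (fun i => vsum m (fun j => vscal (overlap (p i) (p (S i)) (q j) (q (S j))) (g (xi i)))).
Proof.
  intros HP HQ. unfold riemann_sum. apply vsum_ext. intros i Hi. rewrite vsum_scal_l. f_equal.
  pose proof (tagged_partition_point _ _ _ _ _ _ HP i ltac:(lia)).
  pose proof (tagged_partition_point _ _ _ _ _ _ HP (S i) ltac:(lia)).
  rewrite (overlap_partition_sum _ _ a b d' m q eta); try lra; auto.
  apply (tagged_partition_mono _ _ _ _ _ _ HP); lia.
Qed.

Lemma riemann_sum_close g a b d eps n p xi m q eta :
  (forall u v, a <= u <= b -> a <= v <= b -> Rabs (u - v) <= 2 * d -> vnorm (vsub (g u) (g v)) <= eps) ->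
  tagged_partition a b d n p xi -> tagged_partition a b d m q eta ->
  vnorm (vsub (riemann_sum g n p xi) (riemann_sum g m q eta)) <= eps * (b - a).
Proof.
  intros Hg HP HQ.
  set (w := fun i j => overlap (p i) (p (S i)) (q j) (q (S j))).
  assert (E2 : riemann_sum g m q eta = vsum n (fun i => vsum m (fun j => vscal (w i j) (g (eta j))))).
  { rewrite vsum_swap, (riemann_sum_refine g a b d d m q eta n p xi HQ HP).
    apply vsum_ext. intros j _. apply vsum_ext. intros i _. unfold w. now rewrite overlap_comm. }
  assert (E1 : riemann_sum g n p xi = vsum n (fun i => vsum m (fun j => vscal (w i j) (g (xi i)))))
    by exact (riemann_sum_refine g a b d d n p xi m q eta HP HQ).
  rewrite E1, E2, <- vsum_sub.
  eapply Rle_trans; [apply vnorm_vsum_le|].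
  apply Rle_trans with (rsum n (fun i => rsum m (fun j => eps * w i j))).
  - apply rsum_le. intros i Hi. rewrite <- vsum_sub. eapply Rle_trans; [apply vnorm_vsum_le|].
    apply rsum_le. intros j Hj.
    replace (vsub (vscal (w i j) (g (xi i))) (vscal (w i j) (g (eta j))))
      with (vscal (w i j) (vsub (g (xi i)) (g (eta j)))) by vring.
    rewrite vnorm_scal, Rabs_right by (apply Rle_ge, overlap_nonneg).
    destruct (Rle_lt_or_eq_dec 0 (w i j) (overlap_nonneg _ _ _ _)) as [Hw|<-]; [|lra].
    rewrite Rmult_comm. apply Rmult_le_compat_r; [lra|]. apply Hg.
    + apply (tagged_partition_tag _ _ _ _ _ _ HP i Hi).
    + apply (tagged_partition_tag _ _ _ _ _ _ HQ j Hj).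
    + destruct HP as [_ [_ HP]]. destruct HQ as [_ [_ HQ]]. destruct (HP i Hi), (HQ j Hj).
      eapply Rle_trans; [apply (overlap_pos_near _ _ _ _ _ _ H H1 Hw)|lra].
  - right. rewrite (rsum_ext n _ (fun i => eps * (p (S i) - p i))), rsum_scal, rsum_telescope.
    + destruct HP as [-> [-> _]]. reflexivity.
    + intros i Hi. rewrite rsum_scal. f_equal.
      pose proof (tagged_partition_point _ _ _ _ _ _ HP i ltac:(lia)).
      pose proof (tagged_partition_point _ _ _ _ _ _ HP (S i) ltac:(lia)).
      apply (overlap_partition_sum _ _ a b d m q eta); try lra; auto.
      apply (tagged_partition_mono _ _ _ _ _ _ HP); lia.
Qed.

Lemma is_RInt_exists g a b : a <= b -> continuous_on (Icc a b) g -> exists I, is_RInt g a b I.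
Proof.
  intros Hab Hc.
  assert (Cauchy : forall eps, 0 < eps -> exists d, 0 < d /\ forall n p xi m q eta,
     tagged_partition a b d n p xi -> tagged_partition a b d m q eta ->
     vnorm (vsub (riemann_sum g n p xi) (riemann_sum g m q eta)) < eps).
  { intros eps He. destruct (uniform_continuity g a b Hab Hc (eps / (b - a + 1))) as [d [Hd K]].
    { apply Rdiv_lt_0_compat; lra. }
    exists (d / 3). split; [lra|]. intros n p xi m q eta HP HQ.
    eapply Rle_lt_trans; [apply (riemann_sum_close g a b (d / 3) (eps / (b - a + 1))); auto|].
    - intros u v Hu Hv Huv. apply K; auto. lra.
    - apply Rlt_le_trans with (eps / (b - a + 1) * (b - a + 1)); [|right; field; lra].
      apply Rmult_lt_compat_l; [apply Rdiv_lt_0_compat|]; lra. }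
  set (U := fun j => uniform_partition a b (S j)).
  assert (Ufine : forall d, 0 < d -> exists N, forall j, (N <= j)%nat ->
     tagged_partition a b d (S j) (U j) (U j)).
  { intros d Hd. destruct (uniform_partition_fine a b d Hab Hd) as [N HN]. exists N. intros j Hj.
    destruct (HN (S j)) as [Hn Hs]; [lia|]. apply uniform_partition_tagged; auto. }
  set (Sq := fun j => riemann_sum g (S j) (U j) (U j)).
  destruct (vcomplete Sq) as [L HL].
  { intros eps He. destruct (Cauchy eps He) as [d [Hd K]]. destruct (Ufine d Hd) as [N HN].
    exists N. intros m n Hm Hn. apply K; auto. }
  exists L. rewrite is_RInt_iff. intros eps He.
  destruct (Cauchy (eps / 2)) as [d [Hd K]]; [lra|]. exists d; split; auto.
  intros n p xi HP. destruct (Ufine d Hd) as [N1 HN1]. destruct (HL (eps / 2)) as [N2 HN2]; [lra|].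
  specialize (HN1 (max N1 N2) ltac:(lia)). specialize (HN2 (max N1 N2) ltac:(lia)).
  specialize (K _ _ _ _ _ _ HP HN1).
  eapply Rle_lt_trans; [apply (vnorm_sub_triangle _ (Sq (max N1 N2)))|]. unfold Sq, vsub in *. lra.
Qed.

(* Junk value [vzero] when g has no Riemann integral on [a, b]. *)
Definition integral g (a b : R) : X :=
  match excluded_middle_informative (exists I, is_RInt g a b I) with
  | left H => proj1_sig (constructive_indefinite_description _ H)
  | right _ => vzero
  end.

Lemma integral_spec g a b : (exists I, is_RInt g a b I) -> is_RInt g a b (integral g a b).
Proof.
  intros H. unfold integral. destruct excluded_middle_informative; [|contradiction].
  destruct constructive_indefinite_description; auto.
Qed.

Lemma is_RInt_integral g a b : a <= b -> continuous_on (Icc a b) g -> is_RInt g a b (integral g a b).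
Proof. intros; apply integral_spec, is_RInt_exists; auto. Qed.

Lemma integral_unique g a b I : a <= b -> is_RInt g a b I -> integral g a b = I.
Proof. intros Hab H. apply (is_RInt_unique g a b); auto. apply integral_spec; eauto. Qed.

Lemma is_RInt_add g k a b I J : is_RInt g a b I -> is_RInt k a b J ->
  is_RInt (fun s => vadd (g s) (k s)) a b (vadd I J).
Proof.
  rewrite !is_RInt_iff. intros H1 H2 eps He.
  destruct (H1 (eps / 2)) as [d1 [Hd1 K1]]; [lra|]. destruct (H2 (eps / 2)) as [d2 [Hd2 K2]]; [lra|].
  exists (Rmin d1 d2); split; [apply Rmin_pos; auto|]. intros n p xi HP.
  specialize (K1 _ _ _ (tagged_partition_weaken _ _ _ _ _ _ HP _ (Rmin_l d1 d2))).
  specialize (K2 _ _ _ (tagged_partition_weaken _ _ _ _ _ _ HP _ (Rmin_r d1 d2))).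
  unfold riemann_sum in *.
  rewrite (vsum_ext _ _ (fun i => vadd (vscal (p (S i) - p i) (g (xi i))) (vscal (p (S i) - p i) (k (xi i)))))
    by (intros; apply vscal_distr_v).
  rewrite vsum_add. 
  set (S1 := vsum n (fun i => vscal (p (S i) - p i) (g (xi i)))) in *.
  set (S2 := vsum n (fun i => vscal (p (S i) - p i) (k (xi i)))) in *.
  replace (vsub (vadd S1 S2) (vadd I J)) with (vadd (vsub S1 I) (vsub S2 J)) by vring.
  eapply Rle_lt_trans; [apply vnorm_triangle|lra].
Qed.

Lemma is_RInt_bl (A : X -> X) g a b I : bounded_linear A -> is_RInt g a b I ->
  is_RInt (fun s => A (g s)) a b (A I).
Proof.
  rewrite !is_RInt_iff. intros HA H eps He. destruct (bl_bound A HA) as [M [HM HAM]].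
  destruct (H (eps / M)) as [d [Hd K]]; [apply Rdiv_lt_0_compat; auto|].
  exists d; split; auto. intros n p xi HP. specialize (K _ _ _ HP).
  unfold riemann_sum in *.
  rewrite (vsum_ext _ _ (fun i => A (vscal (p (S i) - p i) (g (xi i))))) by (intros; rewrite bl_scal; auto).
  rewrite <- bl_vsum, <- bl_sub by auto. eapply Rle_lt_trans; [apply HAM|].
  apply Rlt_le_trans with (M * (eps / M)); [apply Rmult_lt_compat_l; auto|right; field; lra].
Qed.

Lemma is_RInt_ext g k a b I : (forall s, a <= s <= b -> g s = k s) -> is_RInt g a b I -> is_RInt k a b I.
Proof.
  rewrite !is_RInt_iff. intros E H eps He. destruct (H eps He) as [d [Hd K]]. exists d; split; auto.
  intros n p xi HP. specialize (K _ _ _ HP). unfold riemann_sum in *.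
  rewrite (vsum_ext _ _ (fun i => vscal (p (S i) - p i) (g (xi i)))); auto.
  intros i Hi. rewrite E; auto. apply (tagged_partition_tag _ _ _ _ _ _ HP i Hi).
Qed.

Lemma is_RInt_sub g k a b I J : is_RInt g a b I -> is_RInt k a b J ->
  is_RInt (fun s => vsub (g s) (k s)) a b (vsub I J).
Proof.
  intros HI HJ. apply is_RInt_add; auto.
  apply is_RInt_ext with (fun s => vscal (-1) (k s)); [intros; symmetry; apply vopp_as_scal|].
  rewrite vopp_as_scal. apply (is_RInt_bl (fun v => vscal (-1) v)); auto. apply bl_scalar_mult.
Qed.

Lemma is_RInt_const (v : X) a b : is_RInt (fun _ => v) a b (vscal (b - a) v).
Proof.
  rewrite is_RInt_iff. intros eps He. exists 1; split; [lra|]. intros n p xi [H0 [Hn _]].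
  unfold riemann_sum. rewrite vsum_scal_l, rsum_telescope, H0, Hn.
  replace (vsub (vscal (b - a) v) (vscal (b - a) v)) with (@vzero X) by vring. rewrite vnorm_0; auto.
Qed.

Lemma is_RInt_zero a b : is_RInt (fun _ => @vzero X) a b vzero.
Proof. pose proof (is_RInt_const vzero a b) as H. now rewrite vscal_0_r in H. Qed.

Lemma integral_point g a : integral g a a = vzero.
Proof.
  apply integral_unique; [lra|]. rewrite is_RInt_iff. intros eps He. exists 1; split; [lra|].
  intros n p xi HP. pose proof (tagged_partition_point _ _ _ _ _ _ HP) as Hp.
  unfold riemann_sum. rewrite (vsum_ext _ _ (fun _ => vzero)).
  - rewrite vsum_zero. replace (vsub vzero vzero) with (@vzero X) by vring. rewrite vnorm_0; auto.
  - intros i Hi. destruct (Hp i ltac:(lia)), (Hp (S i) ltac:(lia)).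
    replace (p (S i) - p i) with 0 by lra. apply vscal_0_l.
Qed.

Lemma is_RInt_shift g a b c I : is_RInt g a b I -> is_RInt (fun s => g (s + c)) (a - c) (b - c) I.
Proof.
  rewrite !is_RInt_iff. intros H eps He. destruct (H eps He) as [d [Hd K]]. exists d; split; auto.
  intros n p xi [H0 [Hn Hi]]. specialize (K n (fun i => p i + c) (fun i => xi i + c)).
  unfold riemann_sum in *. erewrite vsum_ext; [apply K|].
  - split; [rewrite H0; ring|]. split; [rewrite Hn; ring|].
    intros i Hi'. destruct (Hi i Hi'). split; lra.
  - intros i Hi'. simpl. f_equal. ring.
Qed.

Lemma is_RInt_norm_le g a b I M : a <= b -> is_RInt g a b I ->
  (forall s, a <= s <= b -> vnorm (g s) <= M) -> vnorm I <= M * (b - a).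
Proof.
  intros Hab H HM. rewrite is_RInt_iff in H. apply Rle_of_le_plus_eps. intros e He.
  destruct (H e He) as [d [Hd K]]. destruct (uniform_partition_exists a b d Hab Hd) as [n HP].
  specialize (K _ _ _ HP). set (RS := riemann_sum g n _ _) in K.
  assert (vnorm RS <= M * (b - a)).
  { unfold RS, riemann_sum. eapply Rle_trans; [apply vnorm_vsum_le|].
    pose proof HP as [H0 [Hn HP']].
    apply Rle_trans with (rsum n (fun i => M * (uniform_partition a b n (S i) - uniform_partition a b n i))).
    - apply rsum_le. intros i Hi. destruct (HP' i Hi).
      rewrite vnorm_scal, Rabs_right, Rmult_comm by lra. apply Rmult_le_compat_r; [lra|].
      apply HM, (tagged_partition_tag _ _ _ _ _ _ HP i Hi).
    - rewrite rsum_scal, rsum_telescope, H0, Hn. lra. }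
  replace I with (vadd (vopp (vsub RS I)) RS) by vring.
  eapply Rle_trans; [apply vnorm_triangle|]. rewrite vnorm_opp. lra.
Qed.

Definition concat_points n1 (p1 p2 : nat -> R) i := if Nat.leb i n1 then p1 i else p2 (i - n1)%nat.
Definition concat_tags n1 (x1 x2 : nat -> R) i := if Nat.ltb i n1 then x1 i else x2 (i - n1)%nat.

Lemma tagged_partition_concat a b c d n1 p1 x1 n2 p2 x2 :
  tagged_partition a b d n1 p1 x1 -> tagged_partition b c d n2 p2 x2 ->
  tagged_partition a c d (n1 + n2) (concat_points n1 p1 p2) (concat_tags n1 x1 x2).
Proof.
  intros [A0 [An A]] [B0 [Bn B]]. unfold concat_points, concat_tags. split; [|split]; auto.
  - destruct (Nat.leb_spec (n1 + n2) n1).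
    + replace n2 with O in * by lia. rewrite Nat.add_0_r. lra.
    + replace (n1 + n2 - n1)%nat with n2 by lia. auto.
  - intros i Hi. destruct (Nat.ltb_spec i n1).
    + rewrite (proj2 (Nat.leb_le i n1)), (proj2 (Nat.leb_le (S i) n1)) by lia. apply A; auto.
    + rewrite (proj2 (Nat.leb_gt (S i) n1)) by lia. destruct (Nat.leb_spec i n1).
      * replace i with n1 by lia. rewrite Nat.sub_diag, An, <- B0.
        replace (S n1 - n1)%nat with (S O) by lia. apply B; lia.
      * replace (S i - n1)%nat with (S (i - n1)) by lia. apply B; lia.
Qed.

Lemma riemann_sum_concat g b n1 p1 x1 n2 p2 x2 : p1 n1 = b -> p2 O = b ->
  riemann_sum g (n1 + n2) (concat_points n1 p1 p2) (concat_tags n1 x1 x2)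
  = vadd (riemann_sum g n1 p1 x1) (riemann_sum g n2 p2 x2).
Proof.
  intros H1 H2. unfold riemann_sum. rewrite vsum_split. f_equal; apply vsum_ext; intros i Hi;
    unfold concat_points, concat_tags.
  - rewrite (proj2 (Nat.leb_le i n1)), (proj2 (Nat.leb_le (S i) n1)), (proj2 (Nat.ltb_lt i n1)) by lia.
    auto.
  - rewrite (proj2 (Nat.leb_gt (S (n1 + i)) n1)), (proj2 (Nat.ltb_ge (n1 + i) n1)) by lia.
    replace (S (n1 + i) - n1)%nat with (S i) by lia. replace (n1 + i - n1)%nat with i by lia.
    destruct (Nat.leb_spec (n1 + i) n1); auto.
    replace i with O by lia. rewrite Nat.add_0_r, H1, H2. auto.
Qed.

Lemma is_RInt_chasles g a b c I J : a <= b -> b <= c -> continuous_on (Icc a c) g ->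
  is_RInt g a b I -> is_RInt g b c J -> is_RInt g a c (vadd I J).
Proof.
  intros Hab Hbc Hc HI HJ. assert (HK := is_RInt_integral g a c ltac:(lra) Hc).
  replace (vadd I J) with (integral g a c); auto.
  rewrite is_RInt_iff in HI, HJ, HK. apply veq_of_small_dist. intros eps He.
  destruct (HI (eps / 3)) as [d1 [Hd1 K1]]; [lra|]. destruct (HJ (eps / 3)) as [d2 [Hd2 K2]]; [lra|].
  destruct (HK (eps / 3)) as [d3 [Hd3 K3]]; [lra|].
  set (d := Rmin d1 (Rmin d2 d3)). assert (Hd : 0 < d) by (repeat apply Rmin_pos; auto).
  assert (D1 : d <= d1) by apply Rmin_l.
  assert (D2 : d <= d2) by (eapply Rle_trans; [apply Rmin_r|apply Rmin_l]).
  assert (D3 : d <= d3) by (eapply Rle_trans; [apply Rmin_r|apply Rmin_r]).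
  destruct (uniform_partition_exists a b d Hab Hd) as [n1 P1].
  destruct (uniform_partition_exists b c d Hbc Hd) as [n2 P2].
  pose proof (tagged_partition_concat _ _ _ _ _ _ _ _ _ _ P1 P2) as P.
  specialize (K1 _ _ _ (tagged_partition_weaken _ _ _ _ _ _ P1 _ D1)).
  specialize (K2 _ _ _ (tagged_partition_weaken _ _ _ _ _ _ P2 _ D2)).
  specialize (K3 _ _ _ (tagged_partition_weaken _ _ _ _ _ _ P _ D3)).
  rewrite (riemann_sum_concat g b) in K3; [|apply P1|apply P2].
  set (S1 := riemann_sum g n1 _ _) in *. set (S2 := riemann_sum g n2 _ _) in *.
  replace (vsub (integral g a c) (vadd I J)) with
    (vadd (vsub (integral g a c) (vadd S1 S2)) (vadd (vsub S1 I) (vsub S2 J))) by vring.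
  eapply Rle_lt_trans; [apply vnorm_triangle|]. rewrite vnorm_sub_comm.
  eapply Rle_lt_trans; [apply Rplus_le_compat_l, vnorm_triangle|]. lra.
Qed.

Lemma integral_chasles g a b c : a <= b -> b <= c -> continuous_on (Icc a c) g ->
  integral g a c = vadd (integral g a b) (integral g b c).
Proof.
  intros Hab Hbc Hc. apply integral_unique; [lra|]. apply is_RInt_chasles with b; auto;
    apply is_RInt_integral; auto; apply continuous_on_mono with (Icc a c); auto; unfold Icc; intros; lra.
Qed.

Lemma integral_ext g k a b : a <= b -> (forall s, a <= s <= b -> g s = k s) ->
  integral g a b = integral k a b.
Proof.
  intros Hab E. destruct (classic (exists I, is_RInt g a b I)) as [[I HI]|Hn].
  - rewrite (integral_unique g a b I Hab HI). symmetry. apply integral_unique; auto.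
    apply is_RInt_ext with g; auto.
  - unfold integral. destruct excluded_middle_informative as [e|n]; [contradiction|].
    destruct excluded_middle_informative as [[I HI]|n']; auto.
    exfalso. apply Hn. exists I. apply is_RInt_ext with k; auto. intros; symmetry; auto.
Qed.
End RiemannIntegral.

Section FundamentalTheorem.
Context {X : Banach}.
Implicit Types g G : R -> X.

Lemma is_RInt_derive G g a b : a <= b -> (forall s, a <= s <= b -> has_deriv_at (Icc a b) G g s) ->
  continuous_on (Icc a b) g -> is_RInt g a b (vsub (G b) (G a)).
Proof.
  intros Hab HD Hc. rewrite is_RInt_iff. intros eps He.
  set (e' := eps / (b - a + 2)). assert (He' : 0 < e') by (apply Rdiv_lt_0_compat; lra).
  destruct (uniform_continuity g a b Hab Hc e' He') as [d [Hd K]].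
  exists d; split; auto. intros n p xi HP. pose proof HP as [H0 [Hn HPi]].
  rewrite <- H0, <- Hn, <- (vsum_telescope n (fun i => G (p i))). unfold riemann_sum.
  rewrite <- vsum_sub. eapply Rle_lt_trans; [apply vnorm_vsum_le|].
  apply Rle_lt_trans with (rsum n (fun i => e' * (p (S i) - p i))).
  - apply rsum_le. intros i Hi. destruct (HPi i Hi) as [Hx Hst].
    pose proof (tagged_partition_point _ _ _ _ _ _ HP i ltac:(lia)).
    pose proof (tagged_partition_point _ _ _ _ _ _ HP (S i) ltac:(lia)).
    (* On the i-th cell, G(s) - s g(xi i) has derivative g(s) - g(xi i), which is small. *)
    set (F := fun s => vsub (G s) (vscal s (g (xi i)))).
    replace (vsub (vscal (p (S i) - p i) (g (xi i))) (vsub (G (p (S i))) (G (p i))))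
      with (vopp (vsub (F (p (S i))) (F (p i)))) by (unfold F; vring).
    rewrite vnorm_opp. apply (mean_value_ineq F (fun s => vsub (g s) (g (xi i)))); [lra| |].
    + intros s Hs. apply has_deriv_at_sub; [|apply has_deriv_at_linear].
      apply has_deriv_at_mono with (Icc a b); [apply HD; lra|].
      apply near_subset_of_subset. unfold Icc; intros; lra.
    + intros s Hs. apply K; try lra. apply Rabs_def1; lra.
  - rewrite rsum_scal, rsum_telescope, H0, Hn.
    apply Rlt_le_trans with (e' * (b - a + 2)); [apply Rmult_lt_compat_l; lra|].
    right; unfold e'; field; lra.
Qed.

Lemma integral_near_const g u v t eps : u <= v -> continuous_on (Icc u v) g ->
  (forall s, u <= s <= v -> vnorm (vsub (g s) (g t)) <= eps) ->
  vnorm (vsub (integral g u v) (vscal (v - u) (g t))) <= eps * (v - u).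
Proof.
  intros Huv Hc Hb. apply is_RInt_norm_le with (g := fun s => vsub (g s) (g t)) (a := u) (b := v); auto.
  apply is_RInt_sub; [apply is_RInt_integral; auto|apply is_RInt_const].
Qed.

Lemma integral_has_deriv_at g a b : a <= b -> continuous_on (Icc a b) g ->
  forall t, a <= t <= b -> has_deriv_at (Icc a b) (fun u => integral g a u) g t.
Proof.
  intros Hab Hc t Ht eps He.
  destruct (Hc t ltac:(unfold Icc; lra) eps He) as [d [Hd K]].
  exists d; split; auto. intros h Hh Ih. unfold Icc in Ih. apply Rabs_def2 in Hh.
  assert (Near : forall s, Rmin t (t + h) <= s <= Rmax t (t + h) -> vnorm (vsub (g s) (g t)) <= eps).
  { intros s Hs. left. pose proof (Rmin_l t (t + h)). pose proof (Rmin_r t (t + h)).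
    pose proof (Rmax_l t (t + h)). pose proof (Rmax_r t (t + h)).
    apply K; [unfold Icc; unfold Rmin, Rmax in *; destruct Rle_dec; lra|].
    apply Rabs_def1; unfold Rmin, Rmax in *; destruct Rle_dec; lra. }
  assert (Sub : forall u v, a <= u -> v <= b -> continuous_on (Icc u v) g)
    by (intros; apply continuous_on_mono with (Icc a b); auto; unfold Icc; intros; lra).
  destruct (Rle_lt_dec 0 h).
  - rewrite (integral_chasles g a t (t + h)), Rabs_right by (try apply Sub; lra).
    replace (vsub (vsub (vadd (integral g a t) (integral g t (t + h))) (integral g a t)) (vscal h (g t)))
      with (vsub (integral g t (t + h)) (vscal (t + h - t) (g t))) by (replace (t + h - t) with h by ring; vring).
    replace h with (t + h - t) at 3 by ring.
    apply integral_near_const; [lra|apply Sub; lra|]. intros s Hs. apply Near.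
    rewrite Rmin_left, Rmax_right; lra.
  - rewrite (integral_chasles g a (t + h) t), Rabs_left by (try apply Sub; lra).
    replace (vsub (vsub (integral g a (t + h)) (vadd (integral g a (t + h)) (integral g (t + h) t))) (vscal h (g t)))
      with (vopp (vsub (integral g (t + h) t) (vscal (t - (t + h)) (g t))))
      by (replace (t - (t + h)) with (- h) by ring; vring).
    rewrite vnorm_opp. replace (- h) with (t - (t + h)) by ring.
    apply integral_near_const; [lra|apply Sub; lra|]. intros s Hs. apply Near.
    rewrite Rmin_right, Rmax_left; lra.
Qed.

Lemma integral_has_deriv_at_Ici g a : continuous_on (Ici a) g ->
  forall t, a <= t -> has_deriv_at (Ici a) (fun u => integral g a u) g t.
Proof.
  intros Hc t Ht. apply has_deriv_at_mono with (Icc a (t + 1)).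
  - apply integral_has_deriv_at; [lra| |lra].
    apply continuous_on_mono with (Ici a); auto. unfold Icc, Ici; intros; lra.
  - exists 1; split; [lra|]. unfold Icc, Ici; intros s Hs Hst. apply Rabs_def2 in Hst. lra.
Qed.
End FundamentalTheorem.

(** * The fundamental solutions x1 and x2 *)

Definition trunc_pow (n : nat) (u : R) : R := (Rmax 0 u) ^ n / INR (fact n).

Lemma trunc_pow_nonpos n u : (1 <= n)%nat -> u <= 0 -> trunc_pow n u = 0.
Proof.
  intros Hn Hu. unfold trunc_pow. rewrite Rmax_left by lra. destruct n; [lia|]. simpl. unfold Rdiv. ring.
Qed.

Lemma trunc_pow_nonneg n u : 0 <= u -> trunc_pow n u = u ^ n / INR (fact n).
Proof. intros Hu. unfold trunc_pow. now rewrite Rmax_right by lra. Qed.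

Lemma trunc_pow_0 u : trunc_pow 0 u = 1.
Proof. unfold trunc_pow. simpl. field. Qed.

Lemma up_div_bounds t tau : 0 < tau -> - tau <= t ->
  (0 <= up (t / tau))%Z /\ t < INR (Z.to_nat (up (t / tau))) * tau /\
  (INR (Z.to_nat (up (t / tau))) - 1) * tau <= t.
Proof.
  intros Ht Hm. destruct (archimed (t / tau)) as [H1 H2].
  assert (t / tau >= -1).
  { apply Rle_ge. apply Rmult_le_reg_r with tau; auto. unfold Rdiv. rewrite Rmult_assoc, Rinv_l; lra. }
  assert (Hz : (0 <= up (t / tau))%Z).
  { assert (Hlt : IZR (-1) < IZR (up (t / tau))) by lra. apply lt_IZR in Hlt. lia. }
  split; auto. rewrite INR_IZR_INZ, Z2Nat.id by auto. split.
  - apply Rmult_lt_reg_r with (/ tau); [apply Rinv_0_lt_compat; auto|].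
    rewrite Rmult_assoc, Rinv_r, Rmult_1_r by lra. auto.
  - apply Rmult_le_reg_r with (/ tau); [apply Rinv_0_lt_compat; auto|].
    rewrite Rmult_assoc, Rinv_r, Rmult_1_r by lra. unfold Rdiv in H2. lra.
Qed.

(* Padding the defining sum of [exp_tau] with vanishing terms. *)
Lemma exp_tau_as_sum {X : Banach} tau (A : X -> X) t v N : 0 < tau -> - tau <= t ->
  (Z.to_nat (up (t / tau)) <= N)%nat ->
  exp_tau tau A t v = vsum (S N) (fun j => vscal (trunc_pow j (t - (INR j - 1) * tau)) (Nat.iter j A v)).
Proof.
  intros Htau Ht HN. unfold exp_tau. destruct (Rlt_dec t (- tau)); [lra|].
  destruct (up_div_bounds t tau Htau Ht) as [_ [Hk1 Hk2]].
  set (k := Z.to_nat (up (t / tau))) in *.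
  replace (S N) with (S k + (N - k))%nat by lia. rewrite vsum_split.
  rewrite (vsum_ext (N - k)%nat _ (fun _ => vzero)), vsum_zero, vadd_0_r.
  - apply vsum_ext. intros j Hj. f_equal. rewrite trunc_pow_nonneg; auto.
    assert (INR j <= INR k) by (apply le_INR; lia). nra.
  - intros j Hj. rewrite trunc_pow_nonpos; [apply vscal_0_l|lia|].
    rewrite plus_INR, S_INR. pose proof (pos_INR j). nra.
Qed.

Lemma derivable_pt_lim_reflect f c s0 l :
  derivable_pt_lim f (c - s0) l -> derivable_pt_lim (fun s => f (c - s)) s0 (- l).
Proof.
  intros H. assert (H1 : derivable_pt_lim (fun s => c - s) s0 (-1)).
  { apply derivable_pt_lim_ext with (f := (fct_cte c - id)%F); [intros; reflexivity|].
    replace (-1) with (0 - 1) by ring.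
    apply derivable_pt_lim_minus; [apply derivable_pt_lim_const|apply derivable_pt_lim_id]. }
  replace (- l) with (l * -1) by ring.
  apply derivable_pt_lim_ext with (f := comp f (fun s => c - s)); [reflexivity|].
  apply derivable_pt_lim_comp; auto.
Qed.

Lemma derivable_pt_lim_pos_part_pow n u0 : (2 <= n)%nat ->
  derivable_pt_lim (fun u => (Rmax 0 u) ^ n) u0 (INR n * (Rmax 0 u0) ^ pred n).
Proof.
  intros Hn. destruct n as [|[|k]]; [lia|lia|]. simpl pred.
  destruct (Rtotal_order u0 0) as [Hl|[->|Hg]].
  - rewrite Rmax_left by lra. replace (INR (S (S k)) * 0 ^ S k) with 0 by (simpl; ring).
    apply derivable_pt_lim_locally_ext with (f := fct_cte 0) (a := u0 - 1) (b := 0); [lra| |].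
    + intros z Hz. rewrite Rmax_left by lra. unfold fct_cte. simpl; ring.
    + apply derivable_pt_lim_const.
  - (* At 0 the difference quotient is (max 0 h)^(k+2)/h, bounded by |h| once |h| < 1. *)
    rewrite Rmax_left by lra. replace (INR (S (S k)) * 0 ^ S k) with 0 by (simpl; ring).
    intros eps Heps. exists (mkposreal (Rmin 1 eps) (Rmin_pos _ _ Rlt_0_1 Heps)). cbn [pos].
    intros h Hh Hhd. rewrite Rplus_0_l, (Rmax_left 0 0) by lra.
    replace (0 ^ S (S k)) with 0 by (simpl; ring).
    assert (Hh1 : Rabs h < 1) by (eapply Rlt_le_trans; [apply Hhd|apply Rmin_l]).
    assert (Hh2 : Rabs h < eps) by (eapply Rlt_le_trans; [apply Hhd|apply Rmin_r]).
    assert (HR : Rabs (Rmax 0 h) <= Rabs h).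
    { unfold Rmax; destruct Rle_dec; [lra|]. rewrite Rabs_R0; apply Rabs_pos. }
    set (r := Rabs (Rmax 0 h)) in *. assert (Hr0 : 0 <= r) by apply Rabs_pos.
    assert (Hhp : 0 < Rabs h) by (apply Rabs_pos_lt; auto).
    replace ((Rmax 0 h ^ S (S k) - 0) / h - 0) with (Rmax 0 h ^ S (S k) / h) by (field; auto).
    unfold Rdiv. rewrite Rabs_mult, <- RPow_abs, Rabs_inv. fold r. rewrite <- tech_pow_Rmult.
    assert (Hk : r ^ k <= 1).
    { destruct k; [simpl; lra|]. left. apply pow_lt_1_compat; [|lia]. split; lra. }
    assert (0 <= r ^ k) by (apply pow_le; lra).
    assert (HSk : r ^ S k <= r) by (simpl; nra).
    assert (0 <= r ^ S k) by (apply pow_le; lra).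
    apply Rle_lt_trans with (r ^ S k); [|lra].
    apply Rmult_le_reg_r with (Rabs h); auto. rewrite Rmult_assoc, Rinv_l by lra. nra.
  - apply derivable_pt_lim_locally_ext with (f := fun u => u ^ S (S k)) (a := 0) (b := u0 + 1); [lra| |].
    + intros z Hz. rewrite Rmax_right by lra. auto.
    + rewrite Rmax_right by lra. apply derivable_pt_lim_pow.
Qed.

Lemma derivable_pt_lim_trunc_pow n u0 : (2 <= n)%nat ->
  derivable_pt_lim (trunc_pow n) u0 (trunc_pow (pred n) u0).
Proof.
  intros Hn. unfold trunc_pow.
  apply derivable_pt_lim_ext with (f := mult_real_fct (/ INR (fact n)) (fun u => (Rmax 0 u) ^ n));
    [intros; unfold mult_real_fct, Rdiv; ring|].
  replace (Rmax 0 u0 ^ pred n / INR (fact (pred n)))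
    with (/ INR (fact n) * (INR n * Rmax 0 u0 ^ pred n)).
  - apply derivable_pt_lim_scal, derivable_pt_lim_pos_part_pow; auto.
  - destruct n; [lia|]. simpl pred. rewrite fact_simpl, mult_INR. field.
    split; apply not_0_INR; [apply fact_neq_0|lia].
Qed.

(* [trunc_pow 1] has a kink at 0, so its derivative only exists on one side. *)
Lemma Rhas_deriv_at_trunc_pow_sub I n c s0 :
  (2 <= n)%nat \/ ((1 <= n)%nat /\ I s0 /\ forall s, I s -> s <= c) ->
  Rhas_deriv_at I (fun s => trunc_pow n (c - s)) (- trunc_pow (pred n) (c - s0)) s0.
Proof.
  intros [Hn|[Hn [Hs0 Hc]]].
  - apply Rhas_deriv_at_of_lim, derivable_pt_lim_reflect, derivable_pt_lim_trunc_pow; auto.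
  - destruct n as [|[|n]]; [lia| |].
    + apply Rhas_deriv_at_eq_on with (c2 := fun s => c - s); [auto| |].
      * intros s Hs. rewrite trunc_pow_nonneg by (specialize (Hc s Hs); lra). simpl. field.
      * apply Rhas_deriv_at_of_lim. simpl pred. rewrite trunc_pow_0.
        apply (derivable_pt_lim_reflect (fun x => x) c s0 1), derivable_pt_lim_id.
    + apply Rhas_deriv_at_of_lim, derivable_pt_lim_reflect, derivable_pt_lim_trunc_pow; lia.
Qed.

Lemma Rcontinuous_at_trunc_pow_sub I n c s0 : Rcontinuous_at I (fun s => trunc_pow n (c - s)) s0.
Proof.
  destruct n as [|[|n]].
  - intros e He. exists 1; split; [lra|]. intros. rewrite !trunc_pow_0.
    replace (1 - 1) with 0 by ring. rewrite Rabs_R0; lra.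
  - intros e He. exists e; split; auto. intros s _ Hs. unfold trunc_pow. simpl.
    replace (Rmax 0 (c - s) * 1 / 1 - Rmax 0 (c - s0) * 1 / 1) with (Rmax 0 (c - s) - Rmax 0 (c - s0))
      by field.
    eapply Rle_lt_trans; [|apply Hs].
    unfold Rmax; destruct (Rle_dec 0 (c - s)), (Rle_dec 0 (c - s0)); unfold Rabs;
      repeat destruct Rcase_abs; lra.
  - apply Rcontinuous_at_of_continuity_pt, derivable_continuous_pt.
    exists (- trunc_pow (S n) (c - s0)).
    apply derivable_pt_lim_reflect, derivable_pt_lim_trunc_pow; lia.
Qed.

Section DelayEquation.
Context {X : Banach}.
Variables (tau : R) (Om Ominv : X -> X).
Hypothesis Htau : 0 < tau.
Hypothesis HOm : bounded_linear Om.
Hypothesis HOmi : bounded_linear Ominv.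
Hypothesis HOminv : forall v, Ominv (Om v) = v.

Local Notation C := (x1 tau Om).
Local Notation K := (x2 tau Om Ominv).

Definition Om_pow n v := Nat.iter n Om v.

Lemma Om_pow_bl n : bounded_linear (Om_pow n).
Proof. apply bl_iter; auto. Qed.

Lemma Om_pow_Om n v : Om_pow n (Om v) = Om (Om_pow n v).
Proof. induction n; simpl; auto. unfold Om_pow in *; simpl. now rewrite IHn. Qed.

Lemma iter_opp_Om n v : Nat.iter n (fun y => vopp (Om y)) v = vscal ((-1) ^ n) (Om_pow n v).
Proof.
  induction n; simpl; [now rewrite vscal_one|].
  rewrite IHn, bl_scal, vopp_as_scal, vscal_assoc by auto. reflexivity.
Qed.

Lemma up_index_le t M : t < INR M * tau -> (Z.to_nat (up (t / tau)) <= M)%nat.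
Proof.
  intros Ht. destruct (archimed (t / tau)) as [_ H2].
  assert (t / tau < INR M) by (apply Rmult_lt_reg_r with tau; auto; unfold Rdiv;
    rewrite Rmult_assoc, Rinv_l; lra).
  assert (Hup : (up (t / tau) <= Z.of_nat M)%Z).
  { assert (Hlt : IZR (up (t / tau)) < IZR (Z.of_nat M) + 1) by (rewrite <- INR_IZR_INZ; lra).
    rewrite <- plus_IZR in Hlt. apply lt_IZR in Hlt. lia. }
  lia.
Qed.

Definition nterms (T : R) : nat := S (Z.to_nat (up (T / tau))).

Lemma nterms_spec T : T < INR (nterms T) * tau.
Proof.
  unfold nterms. destruct (archimed (T / tau)) as [H1 _]. rewrite S_INR.
  assert (T / tau * tau = T) by (field; lra).
  destruct (Z_le_gt_dec 0 (up (T / tau))).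
  - rewrite INR_IZR_INZ, Z2Nat.id by auto. nra.
  - assert (IZR (up (T / tau)) <= 0) by (apply IZR_le; lia).
    pose proof (pos_INR (Z.to_nat (up (T / tau)))). nra.
Qed.

Lemma nterms_pos T : (1 <= nterms T)%nat.
Proof. unfold nterms; lia. Qed.

(* The coefficients of Om^(2m) in x2(u), in x1(u - tau), and the derivative of the latter. *)
Definition x2_coef m u := trunc_pow (S (2 * m)) (u - INR (2 * m) * tau).
Definition x1_coef m u := trunc_pow (2 * m) (u - INR (2 * m) * tau).
Definition x1_coef_deriv m u :=
  match m with O => 0 | S _ => trunc_pow (pred (2 * m)) (u - INR (2 * m) * tau) end.

Lemma x2_as_sum M u v : (1 <= M)%nat -> u < INR M * tau ->
  K u v = vsum M (fun m => vscal (x2_coef m u) (Om_pow (2 * m) v)).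
Proof.
  intros HM Hu. destruct (Rlt_dec u (- tau)) as [Hl|Hl].
  - unfold x2, exp_tau. destruct (Rlt_dec u (- tau)); [|lra].
    replace (vsub vzero vzero) with (@vzero X) by vring. rewrite bl_zero, vscal_0_r by auto.
    rewrite (vsum_ext _ _ (fun _ => vzero)), vsum_zero; auto.
    intros m Hm. unfold x2_coef. rewrite trunc_pow_nonpos; [apply vscal_0_l|lia|].
    pose proof (pos_INR (2 * m)). nra.
  - pose proof (up_index_le u M Hu).
    unfold x2. rewrite !(exp_tau_as_sum tau _ u v (pred (2 * M))) by (auto; lra || lia).
    replace (S (pred (2 * M))) with (2 * M)%nat by lia.
    rewrite <- vsum_sub, vsum_pairs, bl_vsum, <- vsum_scal by auto. apply vsum_ext. intros m Hm.
    rewrite !iter_opp_Om, pow_1_even, pow_1_odd.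
    change (Nat.iter (2 * m) Om v) with (Om_pow (2 * m) v).
    change (Nat.iter (S (2 * m)) Om v) with (Om (Om_pow (2 * m) v)).
    change (Om_pow (S (2 * m)) v) with (Om (Om_pow (2 * m) v)).
    replace (INR (S (2 * m)) - 1) with (INR (2 * m)) by (rewrite S_INR; ring). fold (x2_coef m u).
    set (c0 := trunc_pow (2 * m) _).
    replace (vadd (vsub (vscal c0 (Om_pow (2 * m) v)) (vscal c0 (vscal 1 (Om_pow (2 * m) v))))
          (vsub (vscal (x2_coef m u) (Om (Om_pow (2 * m) v)))
                (vscal (x2_coef m u) (vscal (-1) (Om (Om_pow (2 * m) v))))))
      with (vscal (2 * x2_coef m u) (Om (Om_pow (2 * m) v))) by vring.
    rewrite bl_scal, HOminv, vscal_assoc by auto. f_equal. field.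
Qed.

Lemma x1_as_sum M u v : (1 <= M)%nat -> 0 <= u -> u < INR M * tau ->
  C (u - tau) v = vsum M (fun m => vscal (x1_coef m u) (Om_pow (2 * m) v)).
Proof.
  intros HM Hu0 Hu. assert (u - tau < INR M * tau) by lra.
  pose proof (up_index_le (u - tau) M ltac:(lra)).
  unfold x1. rewrite !(exp_tau_as_sum tau _ (u - tau) v (pred (2 * M))) by (auto; lra || lia).
  replace (S (pred (2 * M))) with (2 * M)%nat by lia.
  rewrite <- vsum_add, <- vsum_scal, vsum_pairs. apply vsum_ext. intros m Hm.
  rewrite !iter_opp_Om, pow_1_even, pow_1_odd.
  change (Nat.iter (2 * m) Om v) with (Om_pow (2 * m) v).
  change (Nat.iter (S (2 * m)) Om v) with (Om_pow (S (2 * m)) v).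
  replace (u - tau - (INR (2 * m) - 1) * tau) with (u - INR (2 * m) * tau) by ring.
  fold (x1_coef m u). vring.
Qed.

Lemma Om2_x2_as_sum M u v : (1 <= M)%nat -> u < INR M * tau ->
  Om (Om (K (u - 2 * tau) v)) = vsum M (fun m => vscal (x1_coef_deriv m u) (Om_pow (2 * m) v)).
Proof.
  intros HM Hu. rewrite (x2_as_sum M) by (auto; lra). rewrite !bl_vsum by auto.
  destruct M as [|M]; [lia|].
  symmetry. rewrite vsum_first. simpl (x1_coef_deriv 0 u). rewrite vscal_0_l, vadd_zero. symmetry.
  change (vsum (S M) ?F) with (vadd (vsum M F) (F M)). cbv beta. rewrite bl_scal, bl_scal by auto.
  unfold x2_coef at 2. rewrite trunc_pow_nonpos, vscal_0_l, vadd_0_r; [|lia|].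
  - apply vsum_ext. intros m Hm. rewrite !bl_scal by auto.
    change (Om (Om (Om_pow (2 * m) v))) with (Om_pow (S (S (2 * m))) v).
    replace (S (S (2 * m))) with (2 * S m)%nat by lia.
    unfold x2_coef, x1_coef_deriv. replace (pred (2 * S m)) with (S (2 * m)) by lia.
    f_equal. f_equal. rewrite !mult_INR, (S_INR m). simpl (INR 2). ring.
  - rewrite mult_INR. rewrite S_INR in Hu. simpl (INR 2). pose proof (pos_INR M). nra.
Qed.

Lemma x2_nonpos u v : u <= 0 -> K u v = vzero.
Proof.
  intros Hu. rewrite (x2_as_sum 1) by (simpl; lia || lra). simpl.
  unfold x2_coef. rewrite trunc_pow_nonpos by (simpl; lia || lra). rewrite vscal_0_l. apply vadd_zero.
Qed.

Lemma x1_neg_tau v : C (- tau) v = v.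
Proof.
  replace (- tau) with (0 - tau) by ring. rewrite (x1_as_sum 1) by (simpl; lia || lra). simpl.
  unfold x1_coef. rewrite trunc_pow_0, vscal_one. apply vadd_zero.
Qed.

Lemma x2_add u v w : K u (vadd v w) = vadd (K u v) (K u w).
Proof.
  pose proof (nterms_spec u). rewrite !(x2_as_sum (nterms u)) by (apply nterms_pos || lra).
  rewrite <- vsum_add. apply vsum_ext. intros. rewrite bl_add by apply Om_pow_bl.
  apply vscal_distr_v.
Qed.

Lemma x2_Om u v : K u (Om v) = Om (K u v).
Proof.
  pose proof (nterms_spec u). rewrite !(x2_as_sum (nterms u)) by (apply nterms_pos || lra).
  rewrite bl_vsum by auto. apply vsum_ext. intros. rewrite bl_scal, Om_pow_Om by auto. reflexivity.
Qed.

Lemma continuous_on_x2_sub (g : R -> X) c a b : a <= b -> continuous_on (Icc a b) g ->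
  continuous_on (Icc a b) (fun s => K (c - s) (g s)).
Proof.
  intros Hab Hg t Ht. pose proof (nterms_spec (c - a)). pose proof (nterms_pos (c - a)).
  set (M := nterms (c - a)) in *.
  apply continuous_at_eq_near with
    (fun s => vsum M (fun m => vscal (trunc_pow (S (2 * m)) ((c - INR (2 * m) * tau) - s))
                                     (Om_pow (2 * m) (g s)))); auto.
  - apply near_subset_of_subset. intros s Hs. unfold Icc in Hs.
    rewrite (x2_as_sum M) by (auto || lra).
    apply vsum_ext. intros. unfold x2_coef. do 2 f_equal. ring.
  - apply continuous_at_vsum. intros m _. apply continuous_at_mul.
    + apply Rcontinuous_at_trunc_pow_sub.
    + apply continuous_at_bl; [apply Om_pow_bl|exact (Hg t Ht)].
Qed.

Lemma Rhas_deriv_at_x2_coef I m t s0 : I s0 -> (forall s, I s -> s <= t) ->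
  Rhas_deriv_at I (fun s => x2_coef m (t - s)) (- x1_coef m (t - s0)) s0.
Proof.
  intros Hs0 Ht.
  apply Rhas_deriv_at_eq_on with (fun s => trunc_pow (S (2 * m)) ((t - INR (2 * m) * tau) - s)); auto.
  - intros; unfold x2_coef; f_equal; ring.
  - replace (x1_coef m (t - s0)) with (trunc_pow (pred (S (2 * m))) ((t - INR (2 * m) * tau) - s0))
      by (unfold x1_coef; simpl pred; f_equal; ring).
    apply Rhas_deriv_at_trunc_pow_sub. destruct m; [right|left; lia].
    split; [lia|split; auto]. intros s Hs. specialize (Ht s Hs). simpl. lra.
Qed.

Lemma Rhas_deriv_at_x1_coef I m t s0 : I s0 ->
  Rhas_deriv_at I (fun s => x1_coef m (t - s)) (- x1_coef_deriv m (t - s0)) s0.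
Proof.
  intros Hs0. destruct m.
  - apply Rhas_deriv_at_eq_on with (fct_cte 1); auto.
    + intros; unfold x1_coef, fct_cte; simpl; symmetry; apply trunc_pow_0.
    + simpl x1_coef_deriv. rewrite Ropp_0. apply Rhas_deriv_at_of_lim, derivable_pt_lim_const.
  - apply Rhas_deriv_at_eq_on with (fun s => trunc_pow (2 * S m) ((t - INR (2 * S m) * tau) - s)); auto.
    + intros; unfold x1_coef; f_equal; ring.
    + replace (x1_coef_deriv (S m) (t - s0))
        with (trunc_pow (pred (2 * S m)) ((t - INR (2 * S m) * tau) - s0))
        by (unfold x1_coef_deriv; f_equal; ring).
      apply Rhas_deriv_at_trunc_pow_sub. left; lia.
Qed.

Definition pairing t (w w' : R -> X) s := vadd (K (t - s) (w' s)) (C (t - s - tau) (w s)).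

Definition feedback t (w : R -> X) s := Om (Om (K (t - s - 2 * tau) (w s))).

Lemma continuous_on_feedback (w : R -> X) t a b : a <= b -> continuous_on (Icc a b) w ->
  continuous_on (Icc a b) (feedback t w).
Proof.
  intros Hab Hw. rewrite continuous_on_iff. intros s Hs. unfold feedback.
  apply continuous_at_bl; [auto|]. apply continuous_at_bl; [auto|].
  apply continuous_at_ext with (fun s => K (t - 2 * tau - s) (w s)); [intros; f_equal; ring|].
  exact (continuous_on_x2_sub w (t - 2 * tau) a b Hab Hw s Hs).
Qed.

Lemma pairing_at_end t (w w' : R -> X) : pairing t w w' t = w t.
Proof.
  unfold pairing. replace (t - t - tau) with (- tau) by ring.
  rewrite x2_nonpos, x1_neg_tau by lra. apply vadd_zero.
Qed.

Lemma pairing_as_sum M t (w w' : R -> X) s : (1 <= M)%nat -> s <= t -> t - s < INR M * tau ->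
  pairing t w w' s = vsum M (fun m => vadd (vscal (x2_coef m (t - s)) (Om_pow (2 * m) (w' s)))
                                           (vscal (x1_coef m (t - s)) (Om_pow (2 * m) (w s)))).
Proof.
  intros HM Hst Hs. unfold pairing. rewrite (x2_as_sum M), (x1_as_sum M) by (auto; lra).
  symmetry. apply vsum_add.
Qed.

Lemma pairing_has_deriv_at t a b (w w' w'' : R -> X) : b <= t ->
  (forall s, a <= s <= b -> has_deriv_at (Icc a b) w w' s) ->
  (forall s, a <= s <= b -> has_deriv_at (Icc a b) w' w'' s) ->
  forall s0, a <= s0 <= b ->
  has_deriv_at (Icc a b) (pairing t w w')
    (fun s => vsub (K (t - s) (w'' s)) (feedback t w s)) s0.
Proof.
  intros Hbt Hw Hw' s0 Hs0. pose proof (nterms_spec (t - a)). pose proof (nterms_pos (t - a)).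
  set (M := nterms (t - a)) in *.
  apply has_deriv_at_eq_near with
    (fun s => vsum M (fun m => vadd (vscal (x2_coef m (t - s)) (Om_pow (2 * m) (w' s)))
                                    (vscal (x1_coef m (t - s)) (Om_pow (2 * m) (w s)))))
    (fun s => vsum M (fun m =>
       vadd (vadd (vscal (- x1_coef m (t - s0)) (Om_pow (2 * m) (w' s)))
                  (vscal (x2_coef m (t - s)) (Om_pow (2 * m) (w'' s))))
            (vadd (vscal (- x1_coef_deriv m (t - s0)) (Om_pow (2 * m) (w s)))
                  (vscal (x1_coef m (t - s)) (Om_pow (2 * m) (w' s)))))).
  - exact Hs0.
  - apply near_subset_of_subset. unfold Icc. intros s Hs. symmetry. apply pairing_as_sum; auto; lra.
  - unfold feedback. rewrite (x2_as_sum M), (Om2_x2_as_sum M) by (auto; lra). rewrite <- vsum_sub.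
    apply vsum_ext. intros. vring.
  - apply has_deriv_at_vsum. intros m _. assert (HI : Icc a b s0) by exact Hs0.
    assert (Hle : forall s, Icc a b s -> s <= t) by (unfold Icc; intros; lra).
    apply has_deriv_at_add; apply has_deriv_at_mul.
    + apply Rhas_deriv_at_x2_coef; auto.
    + apply has_deriv_at_bl; [apply Om_pow_bl|auto].
    + apply Rhas_deriv_at_x1_coef; auto.
    + apply has_deriv_at_bl; [apply Om_pow_bl|auto].
Qed.


Lemma is_RInt_delay_difference (h : R -> X) d t : 0 <= d -> 0 <= t ->
  continuous_on (Icc (- d) t) h -> (forall s, t - d <= s <= t -> h s = vzero) ->
  is_RInt (fun s => vsub (h (s - d)) (h s)) 0 t (integral h (- d) 0).
Proof.
  intros Hd Ht Hh Hvan.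
  assert (Sub : forall u v, - d <= u -> v <= t -> continuous_on (Icc u v) h)
    by (intros; apply continuous_on_mono with (Icc (- d) t); auto; unfold Icc; intros; lra).
  assert (Shift : is_RInt (fun s => h (s - d)) 0 t (integral h (- d) (t - d))).
  { replace 0 with (- d - - d) by ring. replace t with (t - d - - d) at 1 by ring.
    apply is_RInt_ext with (fun s => h (s + - d)); [intros; f_equal; ring|].
    apply is_RInt_shift, is_RInt_integral; [lra|apply Sub; lra]. }
  assert (Tail : integral h (t - d) t = vzero).
  { apply integral_unique; [lra|]. apply is_RInt_ext with (fun _ => vzero); [|apply is_RInt_zero].
    intros; symmetry; apply Hvan; lra. }
  assert (E : integral h (- d) (t - d) = vadd (integral h (- d) 0) (integral h 0 t)).
  { rewrite <- (vadd_0_r (integral h (- d) (t - d))), <- Tail, <- !integral_chasles by (auto; lra).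
    reflexivity. }
  rewrite E in Shift.
  replace (integral h (- d) 0) with (vsub (vadd (integral h (- d) 0) (integral h 0 t)) (integral h 0 t))
    by vring.
  apply is_RInt_sub; auto. apply is_RInt_integral; [lra|apply Sub; lra].
Qed.

(** * Representation of classical solutions *)

Section Representation.
Variables phi phi1 phi2 f : R -> X.
Hypothesis Hphi : has_deriv_on (Icc (-2 * tau) 0) phi phi1.
Hypothesis Hphi1 : has_deriv_on (Icc (-2 * tau) 0) phi1 phi2.
Hypothesis Hphi2 : continuous_on (Icc (-2 * tau) 0) phi2.
Hypothesis Hf : continuous_on (Ici 0) f.

Local Notation P := pairing.

Lemma is_RInt_pairing_initial t b : - 2 * tau <= b -> b <= 0 -> b <= t ->
  is_RInt (fun s => vsub (K (t - s) (phi2 s)) (feedback t phi s)) (-2 * tau) b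
    (vsub (P t phi phi1 b) (P t phi phi1 (-2 * tau))).
Proof.
  intros H1 H2 H3. assert (Cphi := has_deriv_on_continuous _ _ _ Hphi).
  rewrite has_deriv_on_iff in Hphi, Hphi1.
  assert (Near : forall s, -2 * tau <= s <= b -> near_subset (Icc (-2 * tau) b) (Icc (-2 * tau) 0) s)
    by (intros; apply near_subset_of_subset; unfold Icc; intros; lra).
  apply is_RInt_derive; auto.
  - intros s Hs. apply pairing_has_deriv_at; [lra| | |auto]; intros s' Hs';
      (eapply has_deriv_at_mono; [apply Hphi || apply Hphi1; unfold Icc; lra|apply Near; auto]).
  - apply continuous_on_mono with (Icc (-2 * tau) 0); [unfold Icc; intros; lra|].
    rewrite continuous_on_iff. intros s Hs. apply continuous_at_sub.
    + exact (continuous_on_x2_sub phi2 t (-2 * tau) 0 ltac:(lra) Hphi2 s Hs).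
    + exact (continuous_on_feedback phi t (-2 * tau) 0 ltac:(lra) Cphi s Hs).
Qed.

Lemma is_RInt_initial_before_0 t : -2 * tau <= t < 0 ->
  is_RInt (fun s => K (t - s) (phi2 s)) (-2 * tau) 0 (vsub (phi t) (P t phi phi1 (-2 * tau))).
Proof.
  (* For t < 0 both kernels vanish past s = t, so only [-2 tau, t] contributes. *)
  intros Ht. rewrite <- (pairing_at_end t phi phi1).
  replace (vsub (P t phi phi1 t) _) with (vadd (vsub (P t phi phi1 t) (P t phi phi1 (-2 * tau))) vzero)
    by vring.
  apply is_RInt_chasles with t; [lra|lra|apply continuous_on_x2_sub; auto; lra| |].
  - apply is_RInt_ext with (fun s => vsub (K (t - s) (phi2 s)) (feedback t phi s));
      [|apply is_RInt_pairing_initial; lra].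
    intros s Hs. unfold feedback. rewrite (x2_nonpos (t - s - 2 * tau)), !bl_zero by (auto; lra).
    vring.
  - apply is_RInt_ext with (fun _ => vzero); [|apply is_RInt_zero].
    intros s Hs. symmetry. apply x2_nonpos. lra.
Qed.

Variables x x' x'' : R -> X.
Hypothesis Hx : has_deriv_on (Ici (-2 * tau)) x x'.
Hypothesis Hx' : has_deriv_on (Ici 0) x' x''.
Hypothesis Hx'' : continuous_on (Ici 0) x''.
Hypothesis Heq : forall t, 0 <= t -> vsub (x'' t) (Om (Om (x (t - 2 * tau)))) = f t.
Hypothesis Hinit : forall t, -2 * tau <= t <= 0 -> x t = phi t.

Lemma solution_slope_at_0 : x' 0 = phi1 0.
Proof.
  rewrite has_deriv_on_iff in Hx, Hphi.
  apply (has_deriv_at_unique (Icc (-2 * tau) 0) phi).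
  - apply has_deriv_at_eq_near with x x'; auto; [unfold Icc; lra| |].
    + apply near_subset_of_subset. intros; apply Hinit; auto.
    + apply has_deriv_at_mono with (Ici (-2 * tau)); [apply Hx; unfold Ici; lra|].
      apply near_subset_of_subset. unfold Icc, Ici; intros; lra.
  - apply Hphi. unfold Icc; lra.
  - intros d Hd. exists (- Rmin (d / 2) tau). pose proof (Rmin_l (d / 2) tau).
    pose proof (Rmin_r (d / 2) tau). assert (0 < Rmin (d / 2) tau) by (apply Rmin_pos; lra).
    repeat split; try lra. rewrite Rabs_left; lra.
Qed.

Lemma is_RInt_pairing_forced t : 0 <= t ->
  is_RInt (fun s => vadd (K (t - s) (f s)) (vsub (feedback t x (s - 2 * tau)) (feedback t x s)))
    0 t (vsub (x t) (P t x x' 0)).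
Proof.
  intros Ht. rewrite <- (pairing_at_end t x x').
  assert (Cx := has_deriv_on_continuous _ _ _ Hx). rewrite has_deriv_on_iff in Hx, Hx'.
  apply is_RInt_ext with (fun s => vsub (K (t - s) (x'' s)) (feedback t x s)).
  { intros s Hs. rewrite (vsub_eq_add _ _ _ (Heq s ltac:(lra))), x2_add, !x2_Om.
    unfold feedback. replace (t - (s - 2 * tau) - 2 * tau) with (t - s) by ring. vring. }
  apply is_RInt_derive; [auto| |].
  - intros s Hs. apply pairing_has_deriv_at; [lra| | |auto]; intros s' Hs';
      (eapply has_deriv_at_mono; [apply Hx || apply Hx'; unfold Ici; lra|]);
      apply near_subset_of_subset; unfold Icc, Ici; intros; lra.
  - rewrite continuous_on_iff. intros s Hs. apply continuous_at_sub.
    + refine (continuous_on_x2_sub x'' t 0 t Ht _ s Hs).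
      apply continuous_on_mono with (Ici 0); auto. unfold Icc, Ici; intros; lra.
    + refine (continuous_on_feedback x t 0 t Ht _ s Hs).
      apply continuous_on_mono with (Ici (-2 * tau)); auto. unfold Icc, Ici; intros; lra.
Qed.
Lemma solution_representation t : -2 * tau <= t ->
  x t = vadd (vadd (P t phi phi1 (-2 * tau)) (integral (fun s => K (t - s) (phi2 s)) (-2 * tau) 0))
             (if Rlt_dec t 0 then vzero else integral (fun s => K (t - s) (f s)) 0 t).
Proof.
  intros Ht. assert (Cx := has_deriv_on_continuous _ _ _ Hx).
  assert (I1 := is_RInt_integral (fun s => K (t - s) (phi2 s)) (-2 * tau) 0 ltac:(lra)
                  (continuous_on_x2_sub phi2 t (-2 * tau) 0 ltac:(lra) Hphi2)).
  set (J1 := integral _ (-2 * tau) 0) in *.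
  destruct (Rlt_dec t 0) as [Hneg|Hnonneg].
  - rewrite (is_RInt_unique _ (-2 * tau) 0 _ _ ltac:(lra) I1 (is_RInt_initial_before_0 t ltac:(split; lra))).
    rewrite Hinit by lra. vring.
  - set (h := feedback t x).
    assert (Ch : continuous_on (Icc (-2 * tau) t) h).
    { apply continuous_on_feedback; [lra|]. apply continuous_on_mono with (Ici (-2 * tau)); auto.
      unfold Icc, Ici; intros; lra. }
    assert (Cf : continuous_on (Icc 0 t) (fun s => K (t - s) (f s))).
    { apply continuous_on_x2_sub; [lra|]. apply continuous_on_mono with (Ici 0); auto.
      unfold Icc, Ici; intros; lra. }
    assert (Left : vsub (P t phi phi1 0) (P t phi phi1 (-2 * tau)) = vsub J1 (integral h (-2 * tau) 0)).
    { apply (is_RInt_unique (fun s => vsub (K (t - s) (phi2 s)) (feedback t phi s)) (-2 * tau) 0);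
        [lra|apply is_RInt_pairing_initial; lra|].
      apply is_RInt_sub; auto. apply is_RInt_ext with h.
      - intros s Hs. unfold h, feedback. rewrite Hinit by lra. reflexivity.
      - apply is_RInt_integral; [lra|]. apply continuous_on_mono with (Icc (-2 * tau) t); auto.
        unfold Icc; intros; lra. }
    assert (Right : vsub (x t) (P t x x' 0)
                    = vadd (integral (fun s => K (t - s) (f s)) 0 t) (integral h (-2 * tau) 0)).
    { apply (is_RInt_unique (fun s => vadd (K (t - s) (f s)) (vsub (h (s - 2 * tau)) (h s))) 0 t);
        [lra|apply is_RInt_pairing_forced; lra|].
      apply is_RInt_add; [apply is_RInt_integral; auto; lra|].
      replace (-2 * tau) with (- (2 * tau)) by ring.
      apply is_RInt_delay_difference; [lra|lra| |].
      - replace (- (2 * tau)) with (-2 * tau) by ring. auto.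
      - intros s Hs. unfold h, feedback. rewrite x2_nonpos, !bl_zero by (auto; lra). reflexivity. }
    assert (Start : P t x x' 0 = P t phi phi1 0).
    { unfold pairing. rewrite solution_slope_at_0, Hinit by lra. reflexivity. }
    apply vsub_eq_add in Left. apply vsub_eq_add in Right.
    rewrite Right, Start, Left. vring.
Qed.
End Representation.


(** * Existence by the method of steps *)

Section MethodOfSteps.
Variables phi phi1 phi2 f : R -> X.
Hypothesis Hphi : has_deriv_on (Icc (-2 * tau) 0) phi phi1.
Hypothesis Hphi1 : has_deriv_on (Icc (-2 * tau) 0) phi1 phi2.
Hypothesis Hphi2 : continuous_on (Icc (-2 * tau) 0) phi2.
Hypothesis Hf : continuous_on (Ici 0) f.

(* Given a history y, [step y] solves x'' = f + Om^2 y(. - 2 tau) on [0, oo) with the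
   initial data of phi at 0; it coincides with the solution on [-2 tau, c + 2 tau] as soon as
   y does on [-2 tau, c]. *)
Definition forcing (y : R -> X) s := vadd (f s) (Om (Om (y (s - 2 * tau)))).
Definition forcing_integral y u := integral (forcing y) 0 u.
Definition step_deriv y t := if Rle_dec t 0 then phi1 t else vadd (phi1 0) (forcing_integral y t).
Definition step y t :=
  if Rle_dec t 0 then phi t
  else vadd (vadd (phi 0) (vscal t (phi1 0))) (integral (forcing_integral y) 0 t).

Lemma continuous_on_forcing y : continuous_on (Ici (-2 * tau)) y -> continuous_on (Ici 0) (forcing y).
Proof.
  rewrite !continuous_on_iff. intros Hy t Ht. unfold forcing. apply continuous_at_add; [exact (Hf t Ht)|].
  apply continuous_at_bl; [auto|]. apply continuous_at_bl; [auto|].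
  apply continuous_at_comp with (Ici (-2 * tau)); [unfold Ici; intros; lra| |apply Hy; unfold Ici in *; lra].
  intros e He. exists e; split; auto. intros s _ Hs. replace (s - 2 * tau - (t - 2 * tau)) with (s - t) by ring. auto.
Qed.

Lemma forcing_integral_has_deriv_at y : continuous_on (Ici (-2 * tau)) y ->
  forall t, 0 <= t -> has_deriv_at (Ici 0) (forcing_integral y) (forcing y) t.
Proof. intros Hy. apply integral_has_deriv_at_Ici, continuous_on_forcing; auto. Qed.

Lemma continuous_on_forcing_integral y : continuous_on (Ici (-2 * tau)) y ->
  continuous_on (Ici 0) (forcing_integral y).
Proof.
  intros Hy t Ht. apply has_deriv_at_continuous with (forcing y); auto.
  apply forcing_integral_has_deriv_at; auto.
Qed.

Lemma step_initial y s : s <= 0 -> step y s = phi s.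
Proof. intros Hs. unfold step. destruct Rle_dec; [auto|lra]. Qed.

Lemma step_has_deriv_on y : continuous_on (Ici (-2 * tau)) y ->
  has_deriv_on (Ici (-2 * tau)) (step y) (step_deriv y).
Proof.
  intros Hy. rewrite has_deriv_on_iff. intros t Ht. unfold Ici in Ht.
  apply has_deriv_at_glue with 0; try lra.
  - intros Ht0. rewrite has_deriv_on_iff in Hphi. apply has_deriv_at_eq_near with phi phi1.
    + unfold Icc; lra.
    + apply near_subset_of_subset. intros s Hs. unfold Icc in Hs. now rewrite step_initial by lra.
    + unfold step_deriv. destruct Rle_dec; [auto|lra].
    + apply Hphi. unfold Icc; lra.
  - intros Ht0. apply has_deriv_at_eq_near with
      (fun s => vadd (vadd (phi 0) (vscal s (phi1 0))) (integral (forcing_integral y) 0 s))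
      (fun s => vadd (vadd vzero (phi1 0)) (forcing_integral y s)).
    + unfold Ici; lra.
    + apply near_subset_of_subset. intros s Hs. unfold step, Ici in *. destruct Rle_dec; [|auto].
      replace s with 0 by lra. rewrite integral_point, vscal_0_l. vring.
    + unfold step_deriv. destruct Rle_dec; [|vring].
      replace t with 0 by lra. unfold forcing_integral. rewrite integral_point. vring.
    + apply has_deriv_at_add; [apply has_deriv_at_add; [apply has_deriv_at_const|apply has_deriv_at_linear]|].
      apply integral_has_deriv_at_Ici; auto. apply continuous_on_forcing_integral; auto.
Qed.

Lemma continuous_on_step_deriv y : continuous_on (Ici (-2 * tau)) y ->
  continuous_on (Ici (-2 * tau)) (step_deriv y).
Proof.
  intros Hy. assert (Cphi1 := has_deriv_on_continuous _ _ _ Hphi1).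
  rewrite continuous_on_iff. intros t Ht. unfold Ici in Ht.
  apply continuous_at_glue with 0; try lra.
  - intros Ht0. apply continuous_at_eq_near with phi1; [unfold Icc; lra| |apply continuous_on_at; [auto|unfold Icc; lra]].
    apply near_subset_of_subset. intros s Hs. unfold step_deriv, Icc in *. destruct Rle_dec; [auto|lra].
  - intros Ht0. apply continuous_at_eq_near with (fun s => vadd (phi1 0) (forcing_integral y s)).
    + unfold Ici; lra.
    + apply near_subset_of_subset. intros s Hs. unfold step_deriv, Ici in *. destruct Rle_dec; [|auto].
      replace s with 0 by lra. unfold forcing_integral. rewrite integral_point. vring.
    + apply continuous_at_add; [apply continuous_at_const|].
      apply continuous_on_at; [apply continuous_on_forcing_integral; auto|auto].
Qed.

Lemma step_deriv_has_deriv_on y : continuous_on (Ici (-2 * tau)) y ->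
  has_deriv_on (Ici 0) (step_deriv y) (forcing y).
Proof.
  intros Hy. rewrite has_deriv_on_iff. intros t Ht.
  apply has_deriv_at_eq_near with (fun s => vadd (phi1 0) (forcing_integral y s))
    (fun s => vadd vzero (forcing y s)); auto.
  - apply near_subset_of_subset. intros s Hs. unfold step_deriv, Ici in *. destruct Rle_dec; [|auto].
    replace s with 0 by lra. unfold forcing_integral. rewrite integral_point. vring.
  - vring.
  - apply has_deriv_at_add; [apply has_deriv_at_const|apply forcing_integral_has_deriv_at; auto].
Qed.

Lemma step_agree y z c : (forall s, -2 * tau <= s <= c -> y s = z s) ->
  forall s, -2 * tau <= s <= c + 2 * tau ->
  step y s = step z s /\ step_deriv y s = step_deriv z s /\ (0 <= s -> forcing y s = forcing z s).
Proof.
  intros E s Hs.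
  assert (G : forall u, 0 <= u <= c + 2 * tau -> forcing y u = forcing z u).
  { intros u Hu. unfold forcing. rewrite E; auto; lra. }
  assert (V : forall u, 0 <= u <= c + 2 * tau -> forcing_integral y u = forcing_integral z u).
  { intros u Hu. apply integral_ext; [lra|]. intros; apply G; lra. }
  split; [|split].
  - unfold step. destruct Rle_dec; auto. f_equal. apply integral_ext; [lra|]. intros; apply V; lra.
  - unfold step_deriv. destruct Rle_dec; auto. f_equal. apply V; lra.
  - intros; apply G; lra.
Qed.

Definition step_iter n : R -> X :=
  Nat.iter n step (fun t => if Rle_dec t 0 then phi t else phi 0).

Lemma continuous_on_step_iter n : continuous_on (Ici (-2 * tau)) (step_iter n).
Proof.
  induction n; simpl.
  - assert (Cphi := has_deriv_on_continuous _ _ _ Hphi).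
    rewrite continuous_on_iff. intros t Ht. unfold Ici in Ht. apply continuous_at_glue with 0; try lra.
    + intros Ht0. apply continuous_at_eq_near with phi; [unfold Icc; lra| |apply continuous_on_at; [auto|unfold Icc; lra]].
      apply near_subset_of_subset. intros s Hs. unfold Icc in Hs. destruct Rle_dec; [auto|lra].
    + intros Ht0. apply continuous_at_eq_near with (fun _ => phi 0); [unfold Ici; lra| |apply continuous_at_const].
      apply near_subset_of_subset. intros s Hs. unfold Ici in Hs. destruct Rle_dec; auto.
      now replace s with 0 by lra.
  - apply has_deriv_on_continuous with (step_deriv (step_iter n)). apply step_has_deriv_on; auto.
Qed.

Lemma step_iter_succ n s : -2 * tau <= s <= 2 * tau * INR n -> step_iter (S n) s = step_iter n s.
Proof.
  revert s. induction n; intros s Hs.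
  - simpl in *. rewrite step_initial by lra. destruct Rle_dec; [auto|lra].
  - apply (step_agree (step_iter (S n)) (step_iter n) (2 * tau * INR n)); auto.
    rewrite S_INR in Hs. lra.
Qed.

Lemma step_iter_stable n m s : -2 * tau <= s -> s <= 2 * tau * INR n -> s <= 2 * tau * INR m ->
  step_iter n s = step_iter m s.
Proof.
  assert (Mono : forall n m, (n <= m)%nat -> -2 * tau <= s <= 2 * tau * INR n -> step_iter m s = step_iter n s).
  { intros n' m' Hnm Hs. induction m'; [now replace n' with O by lia|].
    destruct (Nat.eq_dec n' (S m')) as [->|]; auto.
    rewrite step_iter_succ; [apply IHm'; lia|].
    assert (INR n' <= INR m') by (apply le_INR; lia). nra. }
  intros H1 H2 H3. destruct (Nat.le_ge_cases n m); [symmetry|]; apply Mono; auto.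
Qed.

Definition steps_needed t := Z.to_nat (up (t / (2 * tau))).

Lemma steps_needed_spec t : -2 * tau <= t -> t < 2 * tau * INR (steps_needed t).
Proof. intros H. destruct (up_div_bounds t (2 * tau)) as [_ [H1 _]]; [lra|lra|]. unfold steps_needed. lra. Qed.

Lemma step_iter_local k s : -2 * tau <= s -> s <= 2 * tau * INR k ->
  step (step_iter (steps_needed s)) s = step (step_iter k) s /\
  step_deriv (step_iter (steps_needed s)) s = step_deriv (step_iter k) s /\
  (0 <= s -> forcing (step_iter (steps_needed s)) s = forcing (step_iter k) s).
Proof.
  intros H1 H2. pose proof (steps_needed_spec s H1).
  pose proof (Rmin_l (2 * tau * INR (steps_needed s)) (2 * tau * INR k)).
  pose proof (Rmin_r (2 * tau * INR (steps_needed s)) (2 * tau * INR k)).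
  apply (step_agree _ _ (Rmin (2 * tau * INR (steps_needed s)) (2 * tau * INR k))).
  - intros u Hu. apply step_iter_stable; lra.
  - split; [lra|]. apply Rmin_case; lra.
Qed.

Definition steps_solution t := step (step_iter (steps_needed t)) t.
Definition steps_solution_deriv t := step_deriv (step_iter (steps_needed t)) t.
Definition steps_solution_deriv2 t := forcing (step_iter (steps_needed t)) t.

Lemma steps_solution_near t : -2 * tau <= t ->
  near_subset (Ici (-2 * tau)) (fun s =>
    step (step_iter (steps_needed t)) s = steps_solution s /\
    step_deriv (step_iter (steps_needed t)) s = steps_solution_deriv s /\
    (0 <= s -> forcing (step_iter (steps_needed t)) s = steps_solution_deriv2 s)) t.
Proof.
  intros Ht. pose proof (steps_needed_spec t Ht). exists (2 * tau * INR (steps_needed t) - t).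
  split; [lra|]. intros s Hs Hst. apply Rabs_def2 in Hst. unfold Ici in Hs.
  destruct (step_iter_local (steps_needed t) s) as [E1 [E2 E3]]; [lra|lra|].
  unfold steps_solution, steps_solution_deriv, steps_solution_deriv2.
  rewrite E1, E2. split; [|split]; auto. intros; rewrite E3; auto.
Qed.

Lemma steps_solution_classical : classical_solution Om tau phi f steps_solution.
Proof.
  exists steps_solution_deriv, phi2, steps_solution_deriv2.
  assert (Cy : forall n, continuous_on (Ici (-2 * tau)) (step_iter n)) by apply continuous_on_step_iter.
  assert (Sub : forall s, Ici 0 s -> Ici (-2 * tau) s) by (unfold Ici; intros; lra).
  split; [|split; [|split; [|split; [|split; [|split; [|split]]]]]].
  - rewrite has_deriv_on_iff. intros t Ht.
    apply has_deriv_at_eq_near with (step (step_iter (steps_needed t)))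
      (step_deriv (step_iter (steps_needed t))); auto.
    + apply (near_subset_weaken _ _ _ _ _ (steps_solution_near t Ht)); [auto|intros; tauto].
    + apply has_deriv_on_iff; auto. apply step_has_deriv_on; auto.
  - rewrite continuous_on_iff. intros t Ht.
    apply continuous_at_eq_near with (step_deriv (step_iter (steps_needed t))); auto.
    + apply (near_subset_weaken _ _ _ _ _ (steps_solution_near t Ht)); [auto|intros; tauto].
    + apply continuous_on_at; auto. apply continuous_on_step_deriv; auto.
  - rewrite has_deriv_on_iff in *. intros t Ht. apply has_deriv_at_eq_near with phi1 phi2; auto.
    apply near_subset_of_subset. intros s Hs. unfold steps_solution_deriv, step_deriv, Icc in *.
    destruct Rle_dec; [auto|lra].
  - exact Hphi2.
  - rewrite has_deriv_on_iff. intros t Ht.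
    apply has_deriv_at_eq_near with (step_deriv (step_iter (steps_needed t)))
      (forcing (step_iter (steps_needed t))); auto.
    + apply (near_subset_weaken _ _ _ _ _ (steps_solution_near t (Sub t Ht))); [auto|intros; tauto].
    + apply has_deriv_on_iff; auto. apply step_deriv_has_deriv_on; auto.
  - rewrite continuous_on_iff. intros t Ht.
    apply continuous_at_eq_near with (forcing (step_iter (steps_needed t))); auto.
    + apply (near_subset_weaken _ _ _ _ _ (steps_solution_near t (Sub t Ht))); [auto|].
      intros s Hs [_ [_ E]]. apply E, Hs.
    + apply continuous_on_at; auto. apply continuous_on_forcing; auto.
  - intros t Ht. unfold steps_solution_deriv2, forcing, steps_solution.
    pose proof (steps_needed_spec t ltac:(lra)). pose proof (steps_needed_spec (t - 2 * tau) ltac:(lra)).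
    change (step (step_iter ?n) ?s) with (step_iter (S n) s).
    rewrite (step_iter_stable (steps_needed t) (S (steps_needed (t - 2 * tau))) (t - 2 * tau));
      [vring|lra|lra|rewrite S_INR; lra].
  - intros t Ht. apply step_initial. lra.
Qed.
End MethodOfSteps.
End DelayEquation.

Lemma classical_solution_representation {X : Banach} (Om Ominv : X -> X) tau (phi phi1 phi2 f x : R -> X) :
  bounded_linear Om -> bounded_linear Ominv -> (forall v, Ominv (Om v) = v) -> 0 < tau ->
  has_deriv_on (Icc (-2 * tau) 0) phi phi1 -> has_deriv_on (Icc (-2 * tau) 0) phi1 phi2 ->
  continuous_on (Icc (-2 * tau) 0) phi2 -> continuous_on (Ici 0) f ->
  classical_solution Om tau phi f x -> forall t, -2 * tau <= t ->
  x t = vadd (vadd (vadd (x1 tau Om (t + tau) (phi (-2 * tau))) (x2 tau Om Ominv (t + 2 * tau) (phi1 (-2 * tau))))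
                   (integral (fun s => x2 tau Om Ominv (t - s) (phi2 s)) (-2 * tau) 0))
             (if Rlt_dec t 0 then vzero else integral (fun s => x2 tau Om Ominv (t - s) (f s)) 0 t).
Proof.
  intros HOm HOmi HOminv Htau Hphi Hphi1 Hphi2 Hf [x' [_ [x'' [Hx [_ [_ [_ [Hx' [Hx'' [Heq Hinit]]]]]]]]]] t Ht.
  rewrite (solution_representation tau Om Ominv Htau HOm HOmi HOminv phi phi1 phi2 f
             Hphi Hphi1 Hphi2 Hf x x' x'' Hx Hx' Hx'' Heq Hinit t Ht).
  unfold pairing. replace (t - -2 * tau) with (t + 2 * tau) by ring.
  replace (t + 2 * tau - tau) with (t + tau) by ring. f_equal. f_equal. apply vadd_comm.
Qed.

Theorem mainTheorem7 (X : Banach) (Om Ominv : X -> X) (tau : R)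
    (phi phi1 phi2 f : R -> X) :
  bounded_linear Om -> bounded_linear Ominv ->
  (forall v, Om (Ominv v) = v) -> (forall v, Ominv (Om v) = v) ->
  0 < tau ->
  has_deriv_on (Icc (-2 * tau) 0) phi phi1 ->
  has_deriv_on (Icc (-2 * tau) 0) phi1 phi2 ->
  continuous_on (Icc (-2 * tau) 0) phi2 ->
  continuous_on (Ici 0) f ->
  (exists x, classical_solution Om tau phi f x) /\
  (forall x y, classical_solution Om tau phi f x -> classical_solution Om tau phi f y ->
     forall t, -2 * tau <= t -> x t = y t) /\
  (forall x, classical_solution Om tau phi f x ->
     forall t, -2 * tau <= t ->
       exists I1 I2 : X,
         is_RInt (fun s => x2 tau Om Ominv (t - s) (phi2 s)) (-2 * tau) 0 I1 /\
         (0 <= t -> is_RInt (fun s => x2 tau Om Ominv (t - s) (f s)) 0 t I2) /\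
         x t = vadd (vadd (vadd (x1 tau Om (t + tau) (phi (-2 * tau)))
                                (x2 tau Om Ominv (t + 2 * tau) (phi1 (-2 * tau))))
                          I1)
                    (if Rlt_dec t 0 then vzero else I2)).
Proof.
  intros HOm HOmi _ HOminv Htau Hphi Hphi1 Hphi2 Hf.
  pose proof (classical_solution_representation Om Ominv tau phi phi1 phi2 f) as Repr.
  split; [|split].
  - eexists. apply (steps_solution_classical tau Om Htau HOm phi phi1 phi2 f); auto.
  - intros x y Hx Hy t Ht. rewrite (Repr x), (Repr y); auto.
  - intros x Hx t Ht. do 2 eexists. split; [|split; [|apply Repr; auto]].
    + apply is_RInt_integral; [lra|]. apply continuous_on_x2_sub; auto; lra.
    + intros Ht0. apply is_RInt_integral; [lra|]. apply continuous_on_x2_sub; auto.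
      apply continuous_on_mono with (Ici 0); auto. unfold Icc, Ici; intros; lra.
Qed.
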